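(* For $\alpha=(\alpha_0,\alpha_1,\alpha_2)\in\mathbb N^3$ and $a,b>0$ with $a\ne b$, $$\mathfrak H_\alpha(a,b)=(-1)^{|\alpha|+1}[1^{\alpha_0+1},a^{\alpha_1+1},b^{\alpha_2+1}]\log=(-1)^{|\alpha|+1}[1^{\alpha_0},a^{\alpha_1+1},b^{\alpha_2+1}]\mathcal L_0=\frac{(-1)^{|\alpha|+\alpha_0+1}}{\alpha_1!\,\alpha_2!}\,\partial_a^{\alpha_1}\partial_b^{\alpha_2}\frac{\mathcal L_{\alpha_0}(b)-\mathcal L_{\alpha_0}(a)}{b-a}.$$ In particular $\mathfrak H_{(r,0,0)}(a,b)=-\frac{\mathcal L_r(b)-\mathcal L_r(a)}{b-a}$ for $r\in\mathbb N$.
   Context: $\mathfrak H_\alpha(a,b):=\int_0^\infty x^{|\alpha|+1}(1+x)^{-\alpha_0-1}(1+ax)^{-\alpha_1-1}(1+bx)^{-\alpha_2-1}\,dx$ for $a,b>0$, $|\alpha|=\alpha_0+\alpha_1+\alpha_2$. $\mathcal L_0(s)=\frac{\log s}{s-1}$ and for $r\in\mathbb N$, $\mathcal L_r(s):=(-1)^r[1^{r+1},s]\log$ (the ''modified logarithm''). Divided differences: for $f$ smooth on an open interval, $[y_0]f=f(y_0)$, $[y_0,\dots,y_n]f=\int_{\{t\ge0,\sum t_j=1\}}f^{(n)}(\sum t_jy_j)\,dt_1\cdots dt_n$, defined also for repeated arguments; $[1^k,a^l,b^q]f$ denotes the divided difference with $k$ arguments $1$, $l$ arguments $a$, $q$ arguments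 $b$. *)

From Stdlib Require Import Reals Lra List Classical ClassicalEpsilon.
Import ListNotations.
Open Scope R_scope.

(* Total Riemann integral on [a,b]: the Riemann integral when f is Riemann
   integrable on [a,b], and 0 otherwise (never used in that case below). *)
Definition Rint (f : R -> R) (a b : R) : R :=
  match excluded_middle_informative (inhabited (Riemann_integrable f a b)) with
  | left h => RiemannInt (epsilon h (fun _ => True))
  | right _ => 0
  end.

Definition improper_int0 (f : R -> R) (L : R) : Prop :=
  (forall T, 0 <= T -> inhabited (Riemann_integrable f 0 T)) /\
  (forall eps, eps > 0 -> exists M, forall T, T >= M ->
      Rabs (Rint f 0 T - L) < eps).

Definition Deriv (f : R -> R) (x : R) : R :=
  epsilon (inhabits 0) (fun l => derivable_pt_lim f x l).

Fixpoint Dn (n : nat) (f : R -> R) : R -> R :=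
  match n with
  | O => f
  | S m => fun x => Deriv (Dn m f) x
  end.

(* Iterated integral over the standard simplex:
   sint y0 [y1;..;yn] F acc mass
     = int_0^mass dt1 int_0^(mass-t1) dt2 ... F(acc + t1 y1 + ... + tn yn + t0 y0)
   with t0 = mass - t1 - ... - tn. *)
Fixpoint sint (y0 : R) (ys : list R) (F : R -> R) (acc mass : R) : R :=
  match ys with
  | nil => F (acc + mass * y0)
  | y :: ys' => Rint (fun t => sint y0 ys' F (acc + t * y) (mass - t)) 0 mass
  end.

(* Divided difference [y0,...,yn] f via the Hermite-Genocchi simplex integral
   int_{t>=0, sum t_j = 1} f^(n)(sum t_j y_j) dt1...dtn. *)
Definition dd (ys : list R) (f : R -> R) : R :=
  match ys with
  | nil => 0
  | y0 :: ys' => sint y0 ys' (Dn (length ys') f) 0 1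
  end.

Definition pts (k : nat) (a : R) (l : nat) (b : R) (q : nat) : list R :=
  repeat 1 k ++ repeat a l ++ repeat b q.

(* L_0(s) = log s / (s - 1), extended by continuity (value 1) at s = 1. *)
Definition L0 (s : R) : R := if Req_EM_T s 1 then 1 else ln s / (s - 1).

Definition Lmod (r : nat) (s : R) : R := (-1) ^ r * dd (repeat 1 (S r) ++ [s]) ln.

Definition Hint (a0 a1 a2 : nat) (a b : R) (x : R) : R :=
  x ^ (a0 + a1 + a2 + 1) / ((1 + x) ^ (a0 + 1) * (1 + a * x) ^ (a1 + 1)
                              * (1 + b * x) ^ (a2 + 1)).

(* Every expression equals J = int_0^1 t^(|alpha|+1) / (P_a(t)^(alpha1+1) P_b(t)^(alpha2+1)) dt,
   where P_y(t) = 1 + t (y - 1).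

   The Hermite-Genocchi integral of f over a list of nodes satisfies the divided-difference
   recursion (fundamental theorem of calculus in the last simplex coordinate) and is Lipschitz in
   the nodes.  It is therefore the only function of the nodes with the one-node values f(y), the
   recursion, and continuity in the last node: when the extreme nodes differ the recursion
   determines it, and when they coincide continuity does.  For f = L0 the kernel integral
   L |-> int_0^1 (-t)^(|L|-1) / prod_(y in L) P_y(t) dt has these properties (since
   L0(y) = int_0^1 dt / P_y(t)), and similarly for log; as P_1 = 1, prepending the node 1 turns
   the divided difference of log into that of L0, and both are (-1)^(|alpha|+1) J.
   Differentiating under the integral sign gives
   d_a^i d_b^j ((L_r(b) - L_r(a)) / (b - a)) = - int_0^1 t^(r+1) d_a^i (1/P_a) d_b^j (1/P_b) dt,
   and the substitution x = t / (1 - t) turns H_alpha into J. *)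

From Stdlib Require Import Reals List Factorial Lra Lia ClassicalEpsilon.
From Coquelicot Require Import Coquelicot.
Import ListNotations.
Open Scope R_scope.

Lemma Rint_RInt f a b : ex_RInt f a b -> Rint f a b = RInt f a b.
Proof.
  intros H. unfold Rint. destruct excluded_middle_informative as [h|h].
  - rewrite (RInt_Reals f a b (epsilon h (fun _ => True))). reflexivity.
  - exfalso. apply h. constructor. now apply ex_RInt_Reals_0.
Qed.

Lemma Rint_ext f g a b : (forall x, Rmin a b <= x <= Rmax a b -> f x = g x) ->
  Rint f a b = Rint g a b.
Proof.
  intros H. unfold Rint.
  destruct excluded_middle_informative as [[pf]|hf];
  destruct excluded_middle_informative as [[pg]|hg].
  - apply RiemannInt_ext. auto.
  - exfalso. apply hg. constructor. eapply Riemann_integrable_ext; eauto.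
  - exfalso. apply hf. constructor. eapply Riemann_integrable_ext; [|exact pg].
    intros; symmetry; auto.
  - reflexivity.
Qed.

Lemma continuity_pt_ex_derive (f : R -> R) x : ex_derive f x -> continuity_pt f x.
Proof.
  intros H. apply continuity_pt_filterlim.
  apply (@ex_derive_continuous R_AbsRing R_NormedModule). exact H.
Qed.

Lemma ex_RInt_continuity_pt f a b : a <= b ->
  (forall t, a <= t <= b -> continuity_pt f t) -> ex_RInt f a b.
Proof.
  intros Hab H. apply (@ex_RInt_continuous R_CompleteNormedModule). intros z Hz.
  rewrite Rmin_left, Rmax_right in Hz by lra. apply continuity_pt_filterlim, H, Hz.
Qed.

Definition clamp a b x := Rmax a (Rmin b x).

Lemma clamp_lipschitz a b x y : Rabs (clamp a b x - clamp a b y) <= Rabs (x - y).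
Proof.
  unfold clamp, Rmax, Rmin.
  repeat destruct Rle_dec; unfold Rabs; repeat destruct Rcase_abs; lra.
Qed.

Lemma clamp_in a b x : a <= b -> a <= clamp a b x <= b.
Proof. intros. unfold clamp, Rmax, Rmin. repeat destruct Rle_dec; lra. Qed.

Lemma clamp_id a b x : a <= x <= b -> clamp a b x = x.
Proof. intros. unfold clamp, Rmax, Rmin. repeat destruct Rle_dec; lra. Qed.

Lemma Rmult_lt_of_lt_div_succ K r eps : 0 <= K -> 0 < eps -> 0 <= r ->
  r < eps / (K + 1) -> K * r < eps.
Proof.
  intros HK Heps Hr H. apply Rle_lt_trans with (K * (eps / (K + 1))).
  - apply Rmult_le_compat_l; lra.
  - apply Rlt_le_trans with ((K + 1) * (eps / (K + 1))).
    + apply Rmult_lt_compat_r; [apply Rdiv_lt_0_compat|]; lra.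
    + right. field. lra.
Qed.

Lemma lipschitz_continuous (f : R -> R) K x : 0 <= K ->
  (forall u v, Rabs (f u - f v) <= K * Rabs (u - v)) -> continuous f x.
Proof.
  intros HK H. apply continuity_pt_filterlim. intros eps Heps.
  exists (eps / (K + 1)). split; [apply Rdiv_lt_0_compat; lra|].
  intros y [_ Hy]. simpl in Hy. unfold R_dist in *.
  eapply Rle_lt_trans; [apply H|]. apply Rmult_lt_of_lt_div_succ; auto using Rabs_pos.
Qed.

(* Clamping to [a, b] extends a Lipschitz function on [a, b] to a continuous function on R. *)
Lemma ex_RInt_lipschitz f a b K : a <= b -> 0 <= K ->
  (forall x y, a <= x <= b -> a <= y <= b -> Rabs (f x - f y) <= K * Rabs (x - y)) ->
  ex_RInt f a b.
Proof.
  intros Hab HK H.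
  apply ex_RInt_ext with (fun t => f (clamp a b t)).
  { intros x Hx. rewrite Rmin_left, Rmax_right in Hx by lra. rewrite clamp_id; lra. }
  apply (@ex_RInt_continuous R_CompleteNormedModule). intros z _.
  apply lipschitz_continuous with K; auto.
  intros u v. eapply Rle_trans; [apply H; apply clamp_in; auto|].
  apply Rmult_le_compat_l; auto. apply clamp_lipschitz.
Qed.

Lemma lipschitz_of_derive F F' lo hi K :
  (forall z, lo <= z <= hi -> derivable_pt_lim F z (F' z)) ->
  (forall z, lo <= z <= hi -> Rabs (F' z) <= K) ->
  forall z z', lo <= z <= hi -> lo <= z' <= hi -> Rabs (F z - F z') <= K * Rabs (z - z').
Proof.
  intros HD HB z z' Hz Hz'.
  destruct (MVT_abs F F' z' z) as [c [Hc Hcin]].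
  { intros c Hc. apply HD. unfold Rmin, Rmax in Hc. destruct Rle_dec; lra. }
  rewrite Hc. apply Rmult_le_compat_r; [apply Rabs_pos|]. apply HB.
  unfold Rmin, Rmax in Hcin. destruct Rle_dec; lra.
Qed.

(* Coquelicot's integration lemmas at type [R -> R] with the operations of [R], so that they
   rewrite terms written with [Rminus]/[Rmult] and leave goals that [ring]/[field] accept. *)
Lemma RInt_ext_R (f g : R -> R) a b :
  (forall x, Rmin a b < x < Rmax a b -> f x = g x) -> RInt f a b = RInt g a b.
Proof. apply RInt_ext. Qed.

Lemma RInt_minus_R (f g : R -> R) a b : ex_RInt f a b -> ex_RInt g a b ->
  RInt (fun x => f x - g x) a b = RInt f a b - RInt g a b.
Proof. exact (RInt_minus f g a b). Qed.

Lemma ex_RInt_minus_R (f g : R -> R) a b : ex_RInt f a b -> ex_RInt g a b ->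
  ex_RInt (fun x => f x - g x) a b.
Proof. exact (ex_RInt_minus f g a b). Qed.

Lemma RInt_scal_R (f : R -> R) a b l : ex_RInt f a b ->
  RInt (fun x => l * f x) a b = l * RInt f a b.
Proof. exact (RInt_scal f a b l). Qed.

Lemma is_RInt_div_diff (f g h : R -> R) a b d : a <= b -> ex_RInt g a b -> ex_RInt h a b ->
  (forall t, a <= t <= b -> f t = (g t - h t) / d) ->
  is_RInt f a b ((RInt g a b - RInt h a b) / d).
Proof.
  intros Hab Hg Hh Hf.
  apply is_RInt_ext with (fun t => scal (/ d) (minus (g t) (h t))).
  { intros t Ht. rewrite Rmin_left, Rmax_right in Ht by lra. rewrite Hf by lra.
    unfold scal, minus, plus, opp. simpl. unfold mult. simpl. unfold Rdiv. ring. }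
  replace ((RInt g a b - RInt h a b) / d) with (scal (/ d) (minus (RInt g a b) (RInt h a b))).
  2: { unfold scal, minus, plus, opp. simpl. unfold mult. simpl. unfold Rdiv. ring. }
  exact (is_RInt_scal _ _ _ _ _
           (is_RInt_minus _ _ _ _ _ _ (RInt_correct g a b Hg) (RInt_correct h a b Hh))).
Qed.

Lemma abs_RInt_diff_le (g g' : R -> R) m m' D E :
  0 <= m -> 0 <= m' -> ex_RInt g 0 m -> ex_RInt g' 0 m' ->
  (forall t, 0 <= t <= Rmin m m' -> Rabs (g t - g' t) <= D) ->
  (forall t, 0 <= t <= m -> Rabs (g t) <= E) ->
  (forall t, 0 <= t <= m' -> Rabs (g' t) <= E) ->
  Rabs (RInt g 0 m - RInt g' 0 m') <= Rmin m m' * D + Rabs (m - m') * E.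
Proof.
  intros Hm Hm' Hg Hg' HD Hb Hb'. set (mu := Rmin m m') in *.
  assert (Hmu : 0 <= mu <= m /\ mu <= m') by (unfold mu, Rmin; destruct Rle_dec; lra).
  assert (Hgap : (m - mu) + (m' - mu) = Rabs (m - m'))
    by (unfold mu, Rmin, Rabs; destruct Rle_dec, Rcase_abs; lra).
  assert (G1 : ex_RInt g 0 mu) by (apply (ex_RInt_Chasles_1 g 0 mu m); auto; lra).
  assert (G2 : ex_RInt g mu m) by (apply (ex_RInt_Chasles_2 g 0 mu m); auto; lra).
  assert (G1' : ex_RInt g' 0 mu) by (apply (ex_RInt_Chasles_1 g' 0 mu m'); auto; lra).
  assert (G2' : ex_RInt g' mu m') by (apply (ex_RInt_Chasles_2 g' 0 mu m'); auto; lra).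
  rewrite <- (RInt_Chasles g 0 mu m), <- (RInt_Chasles g' 0 mu m') by auto.
  change plus with Rplus.
  assert (Hcommon : Rabs (RInt g 0 mu - RInt g' 0 mu) <= mu * D).
  { rewrite <- RInt_minus_R by auto. rewrite <- (Rminus_0_r mu) at 2.
    apply abs_RInt_le_const; [lra|apply ex_RInt_minus_R; auto|]. intros. apply HD. lra. }
  assert (Htail : Rabs (RInt g mu m) <= (m - mu) * E)
    by (apply abs_RInt_le_const; auto; [lra|intros; apply Hb; lra]).
  assert (Htail' : Rabs (RInt g' mu m') <= (m' - mu) * E)
    by (apply abs_RInt_le_const; auto; [lra|intros; apply Hb'; lra]).
  replace (RInt g 0 mu + RInt g mu m - (RInt g' 0 mu + RInt g' mu m'))
    with ((RInt g 0 mu - RInt g' 0 mu) + RInt g mu m - RInt g' mu m') by ring.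
  eapply Rle_trans; [apply Rabs_triang|]. rewrite Rabs_Ropp.
  eapply Rle_trans; [apply Rplus_le_compat_r, Rabs_triang|].
  rewrite <- Hgap. lra.
Qed.

Lemma continuity_bounded f a b : a <= b -> (forall t, a <= t <= b -> continuity_pt f t) ->
  exists C, 0 <= C /\ forall t, a <= t <= b -> Rabs (f t) <= C.
Proof.
  intros Hab Hf. destruct (continuity_ab_maj (fun t => Rabs (f t)) a b Hab) as [x [Hx _]].
  { intros c Hc. apply (continuity_pt_comp f Rabs); [apply Hf, Hc|apply Rcontinuity_abs]. }
  exists (Rabs (f x)). split; [apply Rabs_pos|exact Hx].
Qed.

(** * Regularity of simplex integrals *)

(* The nodes [acc + m * w], [w] in [L], are the vertices of the (scaled) simplex over which
   [sint _ _ _ acc m] integrates. *)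
Definition simplex_in lo hi acc m (L : list R) :=
  0 <= m /\ List.Forall (fun w => lo <= acc + m * w <= hi) L.

Lemma segment_in lo hi acc m y w t : 0 <= t <= m ->
  lo <= acc + m * y <= hi -> lo <= acc + m * w <= hi -> lo <= acc + t * y + (m - t) * w <= hi.
Proof.
  intros Ht Hy Hw. destruct (Req_dec m 0) as [->|Hm].
  { replace t with 0 by lra. lra. }
  replace (acc + t * y + (m - t) * w)
    with ((t * (acc + m * y) + (m - t) * (acc + m * w)) / m) by (field; lra).
  split; [apply Rmult_le_reg_l with m | apply Rmult_le_reg_r with m]; try lra;
    field_simplify; try lra; nra.
Qed.

Lemma simplex_in_inner lo hi acc m y0 y ys t :
  simplex_in lo hi acc m (y0 :: y :: ys) -> 0 <= t <= m ->
  simplex_in lo hi (acc + t * y) (m - t) (y0 :: ys).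
Proof.
  intros [Hm HF] Ht. split; [lra|].
  apply List.Forall_cons_iff in HF as [H0 HF]. apply List.Forall_cons_iff in HF as [Hy HF].
  constructor; [|eapply List.Forall_impl; [|exact HF]; intros w Hw]; apply segment_in; auto.
Qed.

Lemma simplex_in_incl lo hi acc m L L' : incl L' L ->
  simplex_in lo hi acc m L -> simplex_in lo hi acc m L'.
Proof.
  intros Hi [Hm HF]. split; auto. rewrite List.Forall_forall in *. auto.
Qed.

Fixpoint list_dist (l1 l2 : list R) : R :=
  match l1, l2 with x :: l1', y :: l2' => Rabs (x - y) + list_dist l1' l2' | _, _ => 0 end.

Lemma list_dist_ge0 l1 l2 : 0 <= list_dist l1 l2.
Proof.
  revert l2; induction l1 as [|x l1 IH]; intros [|y l2]; simpl; try lra.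
  specialize (IH l2). pose proof (Rabs_pos (x - y)). lra.
Qed.

Lemma list_dist_refl l : list_dist l l = 0.
Proof. induction l; simpl; auto. rewrite IHl, Rminus_diag, Rabs_R0; lra. Qed.

Lemma list_dist_snoc l y y' : list_dist (l ++ [y]) (l ++ [y']) = Rabs (y - y').
Proof.
  induction l as [|x l IH]; simpl; [ring|]. rewrite IH, Rminus_diag, Rabs_R0. ring.
Qed.

Definition list_absmax (L : list R) := fold_right (fun y acc => Rmax (Rabs y) acc) 0 L.

Lemma list_absmax_spec L : 0 <= list_absmax L /\ List.Forall (fun y => Rabs y <= list_absmax L) L.
Proof.
  induction L as [|y L [H0 HL]]; simpl; [split; [lra|constructor]|].
  split; [eapply Rle_trans; [apply H0|apply Rmax_r]|].
  constructor; [apply Rmax_l|]. eapply List.Forall_impl; [|apply HL].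
  intros x Hx. eapply Rle_trans; [apply Hx|apply Rmax_r].
Qed.

Section SimplexRegularity.

Variables (F : R -> R) (lo hi K B : R).
Hypothesis K_ge0 : 0 <= K.
Hypothesis B_ge0 : 0 <= B.
Hypothesis F_lipschitz :
  forall z z', lo <= z <= hi -> lo <= z' <= hi -> Rabs (F z - F z') <= K * Rabs (z - z').
Hypothesis F_bounded : forall z, lo <= z <= hi -> Rabs (F z) <= B.

Definition sint_bounded n := forall y0 ys acc m, length ys = n ->
  simplex_in lo hi acc m (y0 :: ys) -> Rabs (sint y0 ys F acc m) <= B * m ^ n.

Definition sint_lipschitz_with n M Y L :=
  forall y0 y0' ys ys' acc acc' m m', length ys = n -> length ys' = n ->
  List.Forall (fun y => Rabs y <= Y) (y0 :: ys) -> List.Forall (fun y => Rabs y <= Y) (y0' :: ys') ->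
  m <= M -> m' <= M ->
  simplex_in lo hi acc m (y0 :: ys) -> simplex_in lo hi acc' m' (y0' :: ys') ->
  Rabs (sint y0 ys F acc m - sint y0' ys' F acc' m') <=
    L * (Rabs (acc - acc') + Rabs (m - m') + list_dist (y0 :: ys) (y0' :: ys')).

Definition sint_lipschitz n :=
  forall M Y, 0 <= M -> 0 <= Y -> exists L, 0 <= L /\ sint_lipschitz_with n M Y L.

Lemma sint_bounded_0 : sint_bounded 0.
Proof.
  intros y0 [|] acc m Hl [Hm HF]; [|discriminate]. simpl. rewrite Rmult_1_r.
  apply F_bounded. now inversion HF.
Qed.

Lemma sint_lipschitz_0 : sint_lipschitz 0.
Proof.
  intros M Y HM HY. exists (K * (1 + Y + M)). split; [apply Rmult_le_pos; lra|].
  intros y0 y0' [|] [|] acc acc' m m' Hl Hl' HY1 HY2 Hm Hm' [H0 H1] [H0' H1']; try discriminate.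
  simpl. inversion H1; inversion H1'; inversion HY1; inversion HY2; subst.
  eapply Rle_trans; [apply F_lipschitz; auto|]. rewrite Rplus_0_r, Rmult_assoc.
  apply Rmult_le_compat_l; auto.
  replace (acc + m * y0 - (acc' + m' * y0'))
    with ((acc - acc') + (m - m') * y0 + m' * (y0 - y0')) by ring.
  pose proof (Rabs_triang ((acc - acc') + (m - m') * y0) (m' * (y0 - y0'))).
  pose proof (Rabs_triang (acc - acc') ((m - m') * y0)).
  rewrite Rabs_mult in *. rewrite (Rabs_pos_eq m') in * by lra.
  pose proof (Rabs_pos (m - m')). pose proof (Rabs_pos (y0 - y0')).
  pose proof (Rabs_pos (acc - acc')). nra.
Qed.

Section Inner.

Variables (y0 y : R) (ys : list R) (acc m : R).
Hypothesis inner_in : simplex_in lo hi acc m (y0 :: y :: ys).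

Let inner t := sint y0 ys F (acc + t * y) (m - t).

Lemma sint_inner_integrable : sint_lipschitz (length ys) -> ex_RInt inner 0 m.
Proof.
  intros Hlip. destruct (list_absmax_spec (y0 :: y :: ys)) as [HY0 HYs].
  set (Y := list_absmax (y0 :: y :: ys)) in *.
  destruct (Hlip m Y (proj1 inner_in) HY0) as [L [HL Hl]].
  apply List.Forall_cons_iff in HYs as [HYa HYs]. apply List.Forall_cons_iff in HYs as [HYb HYs].
  apply ex_RInt_lipschitz with (L * (Y + 1)); [apply inner_in|apply Rmult_le_pos; lra|].
  intros t t' Ht Ht'. unfold inner. eapply Rle_trans.
  { apply Hl; auto; try lra; try (apply simplex_in_inner; auto; lra); constructor; auto. }
  rewrite list_dist_refl, Rplus_0_r, Rmult_assoc. apply Rmult_le_compat_l; auto.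
  replace (acc + t * y - (acc + t' * y)) with ((t - t') * y) by ring.
  replace (m - t - (m - t')) with (- (t - t')) by ring.
  rewrite Rabs_mult, Rabs_Ropp. pose proof (Rabs_pos (t - t')). nra.
Qed.

Lemma sint_inner_bounded : sint_bounded (length ys) ->
  forall t, 0 <= t <= m -> Rabs (inner t) <= B * m ^ length ys.
Proof.
  intros Hb t Ht. eapply Rle_trans; [apply Hb; auto; apply simplex_in_inner; auto|].
  apply Rmult_le_compat_l; auto. apply pow_incr. lra.
Qed.

End Inner.

Lemma sint_bounded_S n : sint_bounded n -> sint_lipschitz n -> sint_bounded (S n).
Proof.
  intros Hb Hl y0 [|y ys] acc m Hlen Hin; [discriminate|]. injection Hlen as <-.
  simpl sint. rewrite Rint_RInt by (apply sint_inner_integrable; auto).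
  replace (B * m ^ S (length ys)) with ((m - 0) * (B * m ^ length ys)) by (simpl; ring).
  apply abs_RInt_le_const; [apply Hin|apply sint_inner_integrable; auto|].
  apply sint_inner_bounded; auto.
Qed.

Lemma sint_inner_close n M Y L : sint_lipschitz_with n M Y L -> 0 <= L ->
  forall y0 y0' y y' ys ys' acc acc' m m' t, length ys = n -> length ys' = n ->
  List.Forall (fun y => Rabs y <= Y) (y0 :: y :: ys) ->
  List.Forall (fun y => Rabs y <= Y) (y0' :: y' :: ys') -> m <= M -> m' <= M ->
  simplex_in lo hi acc m (y0 :: y :: ys) -> simplex_in lo hi acc' m' (y0' :: y' :: ys') ->
  0 <= t <= Rmin m m' ->
  Rabs (sint y0 ys F (acc + t * y) (m - t) - sint y0' ys' F (acc' + t * y') (m' - t)) <=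
    L * ((M + 1) * (Rabs (acc - acc') + Rabs (m - m') + list_dist (y0 :: y :: ys) (y0' :: y' :: ys'))).
Proof.
  intros Hlip HL y0 y0' y y' ys ys' acc acc' m m' t Hlen Hlen' HY1 HY2 Hm Hm' Hin Hin' Ht.
  pose proof (Rmin_l m m'). pose proof (Rmin_r m m').
  apply List.Forall_cons_iff in HY1 as [HYa HY1]. apply List.Forall_cons_iff in HY1 as [HYb HY1].
  apply List.Forall_cons_iff in HY2 as [HYa' HY2]. apply List.Forall_cons_iff in HY2 as [HYb' HY2].
  eapply Rle_trans.
  { apply Hlip; [exact Hlen|exact Hlen'|constructor; auto|constructor; auto|lra|lra|
      apply simplex_in_inner; auto; lra..]. }
  apply Rmult_le_compat_l; auto.
  replace (acc + t * y - (acc' + t * y')) with ((acc - acc') + t * (y - y')) by ring.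
  replace (m - t - (m' - t)) with (m - m') by ring.
  pose proof (Rabs_triang (acc - acc') (t * (y - y'))). rewrite Rabs_mult, (Rabs_pos_eq t) in * by lra.
  simpl list_dist.
  pose proof (Rabs_pos (acc - acc')). pose proof (Rabs_pos (m - m')). pose proof (Rabs_pos (y - y')).
  pose proof (Rabs_pos (y0 - y0')). pose proof (list_dist_ge0 ys ys').
  assert (t * Rabs (y - y') <= M * Rabs (y - y')) by (apply Rmult_le_compat_r; lra).
  assert (0 <= M * (Rabs (acc - acc') + Rabs (m - m') + (Rabs (y0 - y0') + list_dist ys ys')))
    by (apply Rmult_le_pos; lra).
  nra.
Qed.

Lemma sint_lipschitz_S n : sint_bounded n -> sint_lipschitz n -> sint_lipschitz (S n).
Proof.
  intros Hb Hl M Y HM HY. destruct (Hl M Y HM HY) as [L [HL Hlip]].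
  pose proof (pow_le M n HM) as HMn.
  exists (M * L * (M + 1) + B * M ^ n). split; [nra|].
  intros y0 y0' [|y ys] [|y' ys'] acc acc' m m' Hlen Hlen' HY1 HY2 Hm Hm' Hin Hin';
    try discriminate.
  injection Hlen as <-. injection Hlen' as Hlen'. simpl sint.
  assert (Hb' : sint_bounded (length ys')) by now rewrite Hlen'.
  assert (Hl' : sint_lipschitz (length ys')) by now rewrite Hlen'.
  assert (Hm0 : 0 <= m) by apply Hin. assert (Hm0' : 0 <= m') by apply Hin'.
  rewrite !Rint_RInt by (apply sint_inner_integrable; auto).
  set (d := Rabs (acc - acc') + Rabs (m - m') + list_dist (y0 :: y :: ys) (y0' :: y' :: ys')).
  assert (Hd : Rabs (m - m') <= d).
  { unfold d. simpl. pose proof (Rabs_pos (acc - acc')). pose proof (Rabs_pos (y0 - y0')).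
    pose proof (Rabs_pos (y - y')). pose proof (list_dist_ge0 ys ys'). lra. }
  eapply Rle_trans.
  { apply (abs_RInt_diff_le _ _ m m' (L * ((M + 1) * d)) (B * M ^ length ys)); auto;
      try (apply sint_inner_integrable; auto).
    - intros t Ht. apply (sint_inner_close (length ys) M Y L); auto.
    - intros t Ht. eapply Rle_trans; [apply sint_inner_bounded; auto|].
      apply Rmult_le_compat_l; auto. apply pow_incr. lra.
    - intros t Ht. rewrite <- Hlen'. eapply Rle_trans; [apply sint_inner_bounded; auto|].
      apply Rmult_le_compat_l; auto. apply pow_incr. lra. }
  assert (Hmu : 0 <= Rmin m m' <= M) by (unfold Rmin; destruct Rle_dec; lra).
  pose proof (Rabs_pos (m - m')).
  assert (Rmin m m' * (L * ((M + 1) * d)) <= M * (L * ((M + 1) * d)))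
    by (apply Rmult_le_compat_r; [apply Rmult_le_pos; nra|lra]).
  assert (Rabs (m - m') * (B * M ^ length ys) <= d * (B * M ^ length ys))
    by (apply Rmult_le_compat_r; nra).
  nra.
Qed.

Lemma sint_regular n : sint_bounded n /\ sint_lipschitz n.
Proof.
  induction n as [|n [Hb Hl]].
  - split; [apply sint_bounded_0|apply sint_lipschitz_0].
  - split; [apply sint_bounded_S|apply sint_lipschitz_S]; auto.
Qed.

Lemma sint_inner_ex y0 y ys acc m : simplex_in lo hi acc m (y0 :: y :: ys) ->
  ex_RInt (fun t => sint y0 ys F (acc + t * y) (m - t)) 0 m.
Proof. intros. apply sint_inner_integrable; auto. apply sint_regular. Qed.

End SimplexRegularity.

(** * The divided-difference recursion *)

Lemma sint_ext F G lo hi : (forall z, lo <= z <= hi -> F z = G z) ->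
  forall ys y0 acc m, simplex_in lo hi acc m (y0 :: ys) -> sint y0 ys F acc m = sint y0 ys G acc m.
Proof.
  intros HFG ys. induction ys as [|y ys IH]; intros y0 acc m Hin.
  - simpl. apply HFG. destruct Hin as [_ HF]. now inversion HF.
  - simpl. apply Rint_ext. intros t Ht. assert (Hm : 0 <= m) by apply Hin.
    rewrite Rmin_left, Rmax_right in Ht by lra.
    apply IH, simplex_in_inner; auto.
Qed.

Lemma RInt_segment F F1 lo hi acc m y0 yk : 0 <= m -> y0 <> yk ->
  lo <= acc + m * y0 <= hi -> lo <= acc + m * yk <= hi ->
  (forall z, lo <= z <= hi -> derivable_pt_lim F1 z (F z)) ->
  (forall z, lo <= z <= hi -> continuity_pt F z) ->
  is_RInt (fun t => F (acc + t * yk + (m - t) * y0)) 0 m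
    ((F1 (acc + m * yk) - F1 (acc + m * y0)) / (yk - y0)).
Proof.
  intros Hm Hne H0 Hk HD HC.
  set (u t := acc + t * yk + (m - t) * y0).
  assert (Hu : forall t, 0 <= t <= m -> lo <= u t <= hi) by (intros; apply segment_in; auto).
  set (G t := F1 (u t) / (yk - y0)).
  replace ((F1 (acc + m * yk) - F1 (acc + m * y0)) / (yk - y0)) with (minus (G m) (G 0)).
  2: { unfold G, u, minus, plus, opp. simpl.
       replace (acc + m * yk + (m - m) * y0) with (acc + m * yk) by ring.
       replace (acc + 0 * yk + (m - 0) * y0) with (acc + m * y0) by ring.
       field. lra. }
  apply (@is_RInt_derive R_CompleteNormedModule G).
  - intros t Ht. rewrite Rmin_left, Rmax_right in Ht by lra. apply is_derive_Reals.
    unfold G, Rdiv. replace (F (acc + t * yk + (m - t) * y0))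
      with (F (u t) * (yk - y0) * / (yk - y0)) by (unfold u; field; lra).
    apply derivable_pt_lim_scal_right.
    apply (derivable_pt_lim_comp u F1 t (yk - y0) (F (u t))); [|apply HD, Hu; lra].
    apply is_derive_Reals. unfold u. auto_derive; auto. ring.
  - intros t Ht. rewrite Rmin_left, Rmax_right in Ht by lra.
    apply continuity_pt_filterlim, (continuity_pt_comp u F); [|apply HC, Hu; lra].
    apply continuity_pt_ex_derive. unfold u. auto_derive. auto.
Qed.

Lemma sint_snoc F F1 lo hi K1 B1 : 0 <= K1 -> 0 <= B1 ->
  (forall z, lo <= z <= hi -> derivable_pt_lim F1 z (F z)) ->
  (forall z, lo <= z <= hi -> continuity_pt F z) ->
  (forall z z', lo <= z <= hi -> lo <= z' <= hi -> Rabs (F1 z - F1 z') <= K1 * Rabs (z - z')) ->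
  (forall z, lo <= z <= hi -> Rabs (F1 z) <= B1) ->
  forall ys y0 yk acc m, y0 <> yk -> simplex_in lo hi acc m (y0 :: ys ++ [yk]) ->
  sint y0 (ys ++ [yk]) F acc m = (sint yk ys F1 acc m - sint y0 ys F1 acc m) / (yk - y0).
Proof.
  intros HK HB HD HC HFl HFb ys.
  induction ys as [|y ys IH]; intros y0 yk acc m Hne Hin; assert (Hm : 0 <= m) by apply Hin.
  - destruct Hin as [_ HF]. apply List.Forall_cons_iff in HF as [H0 HF].
    apply List.Forall_cons_iff in HF as [Hk _].
    pose proof (RInt_segment F F1 lo hi acc m y0 yk Hm Hne H0 Hk HD HC) as HI.
    simpl. rewrite Rint_RInt by (eexists; exact HI). exact (is_RInt_unique _ _ _ _ HI).
  - assert (Hin0 : simplex_in lo hi acc m (y0 :: y :: ys)).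
    { eapply simplex_in_incl; [|exact Hin]. intros x. simpl. rewrite in_app_iff. tauto. }
    assert (Hink : simplex_in lo hi acc m (yk :: y :: ys)).
    { eapply simplex_in_incl; [|exact Hin]. intros x. simpl. rewrite in_app_iff. simpl. tauto. }
    assert (HI : is_RInt (fun t => sint y0 (ys ++ [yk]) F (acc + t * y) (m - t)) 0 m
      ((RInt (fun t => sint yk ys F1 (acc + t * y) (m - t)) 0 m
        - RInt (fun t => sint y0 ys F1 (acc + t * y) (m - t)) 0 m) / (yk - y0))).
    { apply is_RInt_div_diff; [|apply (sint_inner_ex F1 lo hi K1 B1); auto..|].
      - exact Hm.
      - intros t Ht. apply IH; auto. apply simplex_in_inner; auto. }
    simpl. rewrite !Rint_RInt by
      (eexists; exact HI) || (apply (sint_inner_ex F1 lo hi K1 B1); auto).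
    exact (is_RInt_unique _ _ _ _ HI).
Qed.

(** * Uniqueness of the divided differences *)

Lemma eq_of_continue_in (f g : R -> R) D x :
  (forall d, 0 < d -> exists y, D y /\ x <> y /\ Rabs (y - x) < d) ->
  continue_in f D x -> continue_in g D x ->
  (forall y, D y -> y <> x -> f y = g y) -> f x = g x.
Proof.
  intros Hacc Hf Hg Heq. apply Rminus_diag_uniq, Rabs_eq_0.
  apply Rle_antisym; [|apply Rabs_pos]. apply Rnot_lt_le. intros He.
  set (e := Rabs (f x - g x)) in *.
  destruct (Hf (e / 2)) as [d1 [Hd1 Hf1]]; [lra|].
  destruct (Hg (e / 2)) as [d2 [Hd2 Hg1]]; [lra|].
  destruct (Hacc (Rmin d1 d2)) as [y [Hy [Hxy Hyx]]]; [apply Rmin_glb_lt; lra|].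
  assert (Hdy : D_x D x y /\ Rdist y x < d1 /\ Rdist y x < d2).
  { repeat split; auto; unfold Rdist; eapply Rlt_le_trans; eauto; [apply Rmin_l|apply Rmin_r]. }
  specialize (Hf1 y (conj (proj1 Hdy) (proj1 (proj2 Hdy)))).
  specialize (Hg1 y (conj (proj1 Hdy) (proj2 (proj2 Hdy)))).
  simpl in Hf1, Hg1. unfold Rdist in Hf1, Hg1.
  rewrite Heq in Hf1 by auto.
  assert (e <= Rabs (g y - f x) + Rabs (g y - g x)).
  { unfold e. replace (f x - g x) with (- (g y - f x) + (g y - g x)) by ring.
    eapply Rle_trans; [apply Rabs_triang|]. rewrite Rabs_Ropp. lra. }
  lra.
Qed.

Lemma interval_limit_point lo hi x : lo < hi -> lo <= x <= hi ->
  forall d, 0 < d -> exists y, lo <= y <= hi /\ x <> y /\ Rabs (y - x) < d.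
Proof.
  intros Hlh Hx d Hd. set (r := Rmin (d / 2) ((hi - lo) / 2)).
  assert (Hr : 0 < r /\ r < d /\ r <= (hi - lo) / 2).
  { unfold r, Rmin. destruct Rle_dec; lra. }
  destruct (Rle_dec (x + r) hi).
  - exists (x + r). replace (x + r - x) with r by ring. rewrite Rabs_pos_eq; lra.
  - exists (x - r). replace (x - r - x) with (- r) by ring. rewrite Rabs_Ropp, Rabs_pos_eq; lra.
Qed.

Definition all_in lo hi (L : list R) := List.Forall (fun y => lo <= y <= hi) L.

Lemma simplex_in_01 lo hi L : all_in lo hi L -> simplex_in lo hi 0 1 L.
Proof.
  intros H. split; [lra|]. eapply List.Forall_impl; [|exact H]. intros y Hy. simpl in Hy. lra.
Qed.

Lemma all_in_snoc_inv lo hi y0 ys y : all_in lo hi (y0 :: ys ++ [y]) ->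
  all_in lo hi (y :: ys) /\ all_in lo hi (y0 :: ys) /\ lo <= y <= hi /\ lo <= y0 <= hi.
Proof.
  unfold all_in. rewrite !List.Forall_forall. intros H.
  assert (H' : forall x, x = y0 \/ In x ys \/ x = y -> lo <= x <= hi).
  { intros x Hx. apply H. simpl. rewrite in_app_iff. simpl. intuition. }
  split; [|split; [|split]]; try (intros u [Hu|Hu]); apply H'; auto.
Qed.

Lemma all_in_snoc lo hi y0 ys y : all_in lo hi (y0 :: ys) -> lo <= y <= hi ->
  all_in lo hi (y0 :: ys ++ [y]).
Proof.
  intros H Hy. apply List.Forall_cons_iff in H as [H0 H]. constructor; auto.
  apply List.Forall_app. split; auto.
Qed.

Lemma sint_snoc_continue_in F lo hi K B : 0 <= K -> 0 <= B ->
  (forall z z', lo <= z <= hi -> lo <= z' <= hi -> Rabs (F z - F z') <= K * Rabs (z - z')) ->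
  (forall z, lo <= z <= hi -> Rabs (F z) <= B) ->
  forall y0 ys yk, all_in lo hi (y0 :: ys ++ [yk]) ->
  continue_in (fun y => sint y0 (ys ++ [y]) F 0 1) (fun y => lo <= y <= hi) yk.
Proof.
  intros HK HB HFl HFb y0 ys yk Hin.
  set (Y := Rmax (Rabs lo) (Rabs hi)).
  assert (HY : forall y, lo <= y <= hi -> Rabs y <= Y).
  { intros y Hy. unfold Y. pose proof (Rmax_l (Rabs lo) (Rabs hi)).
    pose proof (Rmax_r (Rabs lo) (Rabs hi)). unfold Rabs in *.
    destruct (Rcase_abs y), (Rcase_abs lo), (Rcase_abs hi); lra. }
  assert (HYb : forall l, all_in lo hi l -> List.Forall (fun y => Rabs y <= Y) l).
  { intros l Hl. eapply List.Forall_impl; [|exact Hl]. exact HY. }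
  destruct (proj2 (sint_regular F lo hi K B HK HB HFl HFb (length (ys ++ [yk]))) 1 Y)
    as [L [HL Hlip]]; [lra|apply Rle_trans with (Rabs lo); [apply Rabs_pos|apply Rmax_l]|].
  intros eps Heps. exists (eps / (L + 1)). split; [apply Rdiv_lt_0_compat; lra|].
  intros y [[Hy _] Hd]. simpl in *. unfold Rdist in *.
  pose proof (all_in_snoc_inv _ _ _ _ _ Hin) as [_ [Hin0 _]].
  assert (Hiny := all_in_snoc _ _ _ _ _ Hin0 Hy).
  eapply Rle_lt_trans.
  { apply Hlip; try apply simplex_in_01; try apply HYb; auto; try lra.
    rewrite !length_app. reflexivity. }
  rewrite !Rminus_diag, !Rabs_R0, !Rplus_0_l.
  rewrite !app_comm_cons, list_dist_snoc.
  apply Rmult_lt_of_lt_div_succ; auto using Rabs_pos.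
Qed.

Section Uniqueness.

Variables (phi : nat -> R -> R) (lo hi : R) (T : list R -> R).
Hypothesis lo_lt_hi : lo < hi.
Hypothesis phi_deriv :
  forall j z, lo <= z <= hi -> derivable_pt_lim (phi j) z (phi (S j) z).
Hypothesis phi_bounded :
  forall j, exists B, 0 <= B /\ forall z, lo <= z <= hi -> Rabs (phi j z) <= B.
Hypothesis T_single : forall y, lo <= y <= hi -> T [y] = phi 0%nat y.
Hypothesis T_rec : forall y0 ys yk, all_in lo hi (y0 :: ys ++ [yk]) -> y0 <> yk ->
  T (y0 :: ys ++ [yk]) = (T (yk :: ys) - T (y0 :: ys)) / (yk - y0).
Hypothesis T_continue_in : forall y0 ys yk, all_in lo hi (y0 :: ys ++ [yk]) ->
  continue_in (fun y => T (y0 :: ys ++ [y])) (fun y => lo <= y <= hi) yk.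

Lemma phi_lipschitz j : exists K, 0 <= K /\ forall z z', lo <= z <= hi -> lo <= z' <= hi ->
  Rabs (phi j z - phi j z') <= K * Rabs (z - z').
Proof.
  destruct (phi_bounded (S j)) as [B [HB0 HB]]. exists B. split; auto.
  apply lipschitz_of_derive with (phi (S j)); auto.
Qed.

Lemma sint_eq_of_rec n : forall y0 ys, length ys = n -> all_in lo hi (y0 :: ys) ->
  sint y0 ys (phi n) 0 1 = T (y0 :: ys).
Proof.
  induction n as [|n IH]; intros y0 ys Hl Hin.
  { destruct ys; [|discriminate]. simpl. rewrite T_single; [f_equal; ring|]. now inversion Hin. }
  destruct (exists_last (l := ys)) as [ys' [yk ->]]; [intros ->; discriminate|].
  rewrite length_app in Hl. simpl in Hl. assert (Hl' : length ys' = n) by lia.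
  destruct (all_in_snoc_inv _ _ _ _ _ Hin) as [_ [Hin0 [Hyk Hy0]]].
  destruct (phi_bounded n) as [B1 [HB1 HB1']], (phi_lipschitz n) as [K1 [HK1 HK1']].
  destruct (phi_bounded (S n)) as [B2 [HB2 HB2']], (phi_lipschitz (S n)) as [K2 [HK2 HK2']].
  assert (Hne : forall y, lo <= y <= hi -> y <> y0 ->
    sint y0 (ys' ++ [y]) (phi (S n)) 0 1 = T (y0 :: ys' ++ [y])).
  { intros y Hy Hne. assert (Hiny := all_in_snoc _ _ _ _ _ Hin0 Hy).
    destruct (all_in_snoc_inv _ _ _ _ _ Hiny) as [Hink _].
    rewrite (sint_snoc (phi (S n)) (phi n) lo hi K1 B1); auto.
    - rewrite !IH by auto. rewrite T_rec; auto.
    - intros z Hz. apply derivable_continuous_pt. eexists. apply phi_deriv, Hz.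
    - apply simplex_in_01, Hiny. }
  destruct (Req_dec yk y0) as [->|Hne0]; [|apply Hne; auto].
  apply (eq_of_continue_in (fun y => sint y0 (ys' ++ [y]) (phi (S n)) 0 1)
           (fun y => T (y0 :: ys' ++ [y])) (fun y => lo <= y <= hi) y0).
  - apply interval_limit_point; auto.
  - apply (sint_snoc_continue_in _ lo hi K2 B2); auto.
  - apply T_continue_in, Hin.
  - exact Hne.
Qed.

End Uniqueness.

(** * Kernels over products of linear factors *)

Definition factor t y := 1 + t * (y - 1).

Fixpoint prod_factor t (L : list R) : R :=
  match L with [] => 1 | y :: L' => factor t y * prod_factor t L' end.

Lemma factor_1 t : factor t 1 = 1.
Proof. unfold factor. ring. Qed.

Lemma prod_factor_app t l1 l2 : prod_factor t (l1 ++ l2) = prod_factor t l1 * prod_factor t l2.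
Proof. induction l1 as [|y l1 IH]; simpl; [ring|]. rewrite IH. ring. Qed.

Lemma prod_factor_repeat t y k : prod_factor t (repeat y k) = factor t y ^ k.
Proof. induction k as [|k IH]; simpl; auto. rewrite IH. ring. Qed.

Lemma Rmin_1_pos lo : 0 < lo -> 0 < Rmin 1 lo.
Proof. intros. unfold Rmin. destruct Rle_dec; lra. Qed.

Lemma factor_lb t y lo : 0 <= t <= 1 -> 0 < lo <= y -> Rmin 1 lo <= factor t y.
Proof. intros Ht Hy. unfold factor, Rmin. destruct Rle_dec; destruct (Rle_dec 1 y); nra. Qed.

Lemma factor_pos t y : 0 <= t <= 1 -> 0 < y -> 0 < factor t y.
Proof.
  intros Ht Hy. pose proof (factor_lb t y y Ht (conj Hy (Rle_refl y))).
  pose proof (Rmin_1_pos y Hy). lra.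
Qed.

Lemma prod_factor_lb t L lo hi : 0 <= t <= 1 -> 0 < lo -> all_in lo hi L ->
  Rmin 1 lo ^ length L <= prod_factor t L.
Proof.
  intros Ht Hlo HL. induction HL as [|y L Hy HL IH]; simpl; [lra|].
  pose proof (Rmin_1_pos lo Hlo).
  apply Rmult_le_compat; [lra|apply pow_le; lra|apply factor_lb; auto; lra|auto].
Qed.

Lemma prod_factor_pos t L lo hi : 0 <= t <= 1 -> 0 < lo -> all_in lo hi L ->
  0 < prod_factor t L.
Proof.
  intros. eapply Rlt_le_trans; [|eapply prod_factor_lb; eauto].
  apply pow_lt, Rmin_1_pos; auto.
Qed.

Lemma continuity_pt_prod_factor L t : continuity_pt (fun t => prod_factor t L) t.
Proof.
  induction L as [|y L IH]; simpl.
  - apply continuity_pt_const. intros u v; auto.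
  - apply continuity_pt_mult; auto. apply continuity_pt_ex_derive. unfold factor. auto_derive. auto.
Qed.

Lemma pow_le_1 t n : 0 <= t <= 1 -> t ^ n <= 1.
Proof. intros. induction n; simpl; nra. Qed.

Definition kern (c : nat -> R -> R) (L : list R) t := c (length L) t / prod_factor t L.

Lemma continuity_pt_kern c L lo hi t : 0 < lo -> all_in lo hi L -> 0 <= t <= 1 ->
  continuity_pt (c (length L)) t -> continuity_pt (kern c L) t.
Proof.
  intros Hlo HL Ht Hc. apply continuity_pt_div; auto; [apply continuity_pt_prod_factor|].
  pose proof (prod_factor_pos t L lo hi Ht Hlo HL). lra.
Qed.

Lemma kern_rec c y0 ys yk t : c (S (S (length ys))) t = - t * c (S (length ys)) t ->
  factor t y0 <> 0 -> factor t yk <> 0 -> prod_factor t ys <> 0 -> y0 <> yk ->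
  kern c (y0 :: ys ++ [yk]) t = (kern c (yk :: ys) t - kern c (y0 :: ys) t) / (yk - y0).
Proof.
  intros Hc H0 Hk Hys Hne. unfold kern.
  rewrite app_comm_cons, prod_factor_app, length_app. simpl length.
  rewrite Nat.add_1_r, Hc. simpl prod_factor. unfold factor in *.
  field. repeat split; auto. intro; apply Hne; lra.
Qed.

Lemma inv_factor_lipschitz t y y' lo : 0 <= t <= 1 -> 0 < lo <= y -> lo <= y' ->
  Rabs (/ factor t y - / factor t y') <= / Rmin 1 lo ^ 2 * Rabs (y - y').
Proof.
  intros Ht Hy Hy'. set (mn := Rmin 1 lo). assert (Hmn : 0 < mn) by (apply Rmin_1_pos; lra).
  pose proof (factor_lb t y lo Ht Hy). pose proof (factor_lb t y' lo Ht (conj (proj1 Hy) Hy')).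
  fold mn in H, H0.
  replace (/ factor t y - / factor t y') with (t * (y' - y) / (factor t y * factor t y'))
    by (unfold factor in *; field; lra).
  unfold Rdiv. rewrite Rabs_mult, Rabs_mult, Rabs_inv, (Rabs_pos_eq t), Rabs_minus_sym by lra.
  rewrite (Rabs_pos_eq (_ * _)) by nra.
  assert (/ (factor t y * factor t y') <= / mn ^ 2)
    by (apply Rinv_le_contravar;
        [apply pow_lt; lra|simpl; rewrite Rmult_1_r; apply Rmult_le_compat; lra]).
  assert (0 <= / (factor t y * factor t y')) by (apply Rlt_le, Rinv_0_lt_compat; nra).
  apply Rle_trans with ((t * / (factor t y * factor t y')) * Rabs (y - y')); [right; ring|].
  apply Rmult_le_compat_r; [apply Rabs_pos|nra].
Qed.

Lemma RInt_div_factor_continue_in (A : R -> R) lo hi yk : 0 < lo <= yk ->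
  (forall t, 0 <= t <= 1 -> continuity_pt A t) ->
  continue_in (fun y => RInt (fun t => A t / factor t y) 0 1) (fun y => lo <= y <= hi) yk.
Proof.
  intros Hyk HA. destruct (continuity_bounded A 0 1) as [C [HC HAC]]; [lra|auto|].
  assert (Hex : forall y, lo <= y -> ex_RInt (fun t => A t / factor t y) 0 1).
  { intros y Hy. apply ex_RInt_continuity_pt; [lra|]. intros t Ht.
    pose proof (factor_pos t y Ht ltac:(lra)).
    apply continuity_pt_div; auto; [|lra].
    apply continuity_pt_ex_derive. unfold factor. auto_derive. auto. }
  set (K := C / Rmin 1 lo ^ 2).
  assert (HK : 0 <= K) by (apply Rdiv_le_0_compat; [|apply pow_lt, Rmin_1_pos]; lra).
  intros eps Heps. exists (eps / (K + 1)). split; [apply Rdiv_lt_0_compat; lra|].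
  intros y [[Hy _] Hd]. simpl in *. unfold Rdist in *.
  rewrite <- RInt_minus_R by (apply Hex; lra).
  apply Rle_lt_trans with ((1 - 0) * (K * Rabs (y - yk))).
  - apply abs_RInt_le_const; [lra|apply ex_RInt_minus_R; apply Hex; lra|].
    intros t Ht. unfold Rdiv. rewrite <- Rmult_minus_distr_l, Rabs_mult.
    unfold K, Rdiv. rewrite Rmult_assoc.
    apply Rmult_le_compat; try apply Rabs_pos; auto. apply inv_factor_lipschitz; auto; lra.
  - rewrite Rminus_0_r, Rmult_1_l. apply Rmult_lt_of_lt_div_succ; auto using Rabs_pos.
Qed.

Lemma RInt_kern_continue_in c lo hi y0 ys yk : 0 < lo -> all_in lo hi (y0 :: ys ++ [yk]) ->
  (forall t, continuity_pt (c (length ys + 2)%nat) t) ->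
  continue_in (fun y => RInt (kern c (y0 :: ys ++ [y])) 0 1) (fun y => lo <= y <= hi) yk.
Proof.
  intros Hlo Hin Hc. destruct (all_in_snoc_inv _ _ _ _ _ Hin) as [_ [Hin0 [Hyk _]]].
  (* As [factor t 1 = 1], [A] is the kernel with its last factor removed. *)
  set (A t := kern c (y0 :: ys ++ [1]) t).
  assert (HE : forall y, lo <= y <= hi ->
    RInt (kern c (y0 :: ys ++ [y])) 0 1 = RInt (fun t => A t / factor t y) 0 1).
  { intros y Hy. apply RInt_ext_R. intros t Ht. rewrite Rmin_left, Rmax_right in Ht by lra.
    unfold A, kern. rewrite !app_comm_cons, !prod_factor_app, !length_app. simpl.
    rewrite factor_1. apply List.Forall_cons_iff in Hin0 as [Hy0 Hys].
    pose proof (factor_pos t y ltac:(lra) ltac:(lra)).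
    pose proof (factor_pos t y0 ltac:(lra) ltac:(lra)).
    pose proof (prod_factor_pos t ys lo hi ltac:(lra) Hlo Hys).
    field. lra. }
  intros eps Heps.
  destruct (RInt_div_factor_continue_in A lo hi yk) with eps as [d [Hd Hdd]]; auto; [lra| |].
  - intros t Ht. unfold A, kern. apply continuity_pt_div; [|apply continuity_pt_prod_factor|].
    + replace (length (y0 :: ys ++ [1])) with (length ys + 2)%nat
        by (simpl; rewrite length_app; simpl; lia). auto.
    + rewrite app_comm_cons, prod_factor_app. simpl. rewrite factor_1, Rmult_1_r.
      pose proof (prod_factor_pos t (y0 :: ys) lo hi Ht Hlo Hin0). simpl in *. lra.
  - exists d. split; auto. intros y [[Hy Hne] Hdy]. rewrite !HE by lra.
    apply Hdd. repeat split; auto; apply Hy.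
Qed.

(** * Derivatives of [ln] and [L0] *)

Lemma Deriv_unique f x l : derivable_pt_lim f x l -> Deriv f x = l.
Proof.
  intros H. unfold Deriv.
  apply (uniqueness_limite f x); [|exact H].
  apply (epsilon_spec (inhabits 0) (fun l => derivable_pt_lim f x l)). eauto.
Qed.

Lemma Dn_eq_on f (phi : nat -> R -> R) lo hi :
  (forall x, lo < x < hi -> f x = phi 0%nat x) ->
  (forall j x, lo < x < hi -> derivable_pt_lim (phi j) x (phi (S j) x)) ->
  forall j x, lo < x < hi -> Dn j f x = phi j x.
Proof.
  intros H0 HD j. induction j as [|j IH]; intros x Hx; [apply H0, Hx|].
  simpl. apply Deriv_unique, (derivable_pt_lim_locally_ext (phi j) _ x lo hi); auto.
  intros y Hy. symmetry. apply IH, Hy.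
Qed.

Definition ln_deriv (j : nat) (x : R) : R :=
  match j with O => ln x | S k => (-1) ^ k * INR (fact k) / x ^ S k end.

Lemma ln_deriv_derivable j z : 0 < z -> derivable_pt_lim (ln_deriv j) z (ln_deriv (S j) z).
Proof.
  intros Hz. destruct j as [|k].
  - simpl. replace (1 * 1 / (z * 1)) with (/ z) by (field; lra).
    apply derivable_pt_lim_ln, Hz.
  - apply is_derive_Reals. unfold ln_deriv.
    auto_derive; [apply Rmult_integral_contrapositive_currified; [lra|apply pow_nonzero; lra]|].
    rewrite fact_simpl, mult_INR, S_INR. simpl pow.
    replace (match k with 0%nat => 1 | S _ => INR k + 1 end) with (INR k + 1)
      by (destruct k; simpl; ring).
    assert (z ^ k <> 0) by (apply pow_nonzero; lra). field. lra.
Qed.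

Lemma ln_deriv_bounded j lo hi : 0 < lo ->
  exists B, 0 <= B /\ forall z, lo <= z <= hi -> Rabs (ln_deriv j z) <= B.
Proof.
  intros Hlo. destruct j as [|k].
  - exists (Rabs (ln lo) + Rabs (ln hi)).
    split; [pose proof (Rabs_pos (ln lo)); pose proof (Rabs_pos (ln hi)); lra|].
    intros z Hz. simpl.
    assert (ln lo <= ln z) by (apply ln_le; lra). assert (ln z <= ln hi) by (apply ln_le; lra).
    unfold Rabs; repeat destruct Rcase_abs; lra.
  - exists (INR (fact k) / lo ^ S k).
    split; [apply Rdiv_le_0_compat; [apply pos_INR|apply pow_lt; lra]|].
    intros z Hz. unfold ln_deriv, Rdiv. rewrite !Rabs_mult, Rabs_inv, pow_1_abs, Rmult_1_l.
    rewrite Rabs_pos_eq by apply pos_INR. rewrite (Rabs_pos_eq (z ^ S k)) by (apply pow_le; lra).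
    apply Rmult_le_compat_l; [apply pos_INR|].
    apply Rinv_le_contravar; [apply pow_lt; lra|apply pow_incr; lra].
Qed.

Lemma Dn_ln j z : 0 < z -> Dn j ln z = ln_deriv j z.
Proof.
  intros Hz. apply (Dn_eq_on ln ln_deriv 0 (z + 1)); try lra; [reflexivity|].
  intros j' x Hx. apply ln_deriv_derivable. lra.
Qed.

Lemma difference_quotient_le (phi psi : R -> R) z0 h C : h <> 0 ->
  (forall z, Rmin z0 (z0 + h) <= z <= Rmax z0 (z0 + h) -> derivable_pt_lim phi z (psi z)) ->
  (forall z, Rmin z0 (z0 + h) <= z <= Rmax z0 (z0 + h) -> Rabs (psi z - psi z0) <= C) ->
  Rabs ((phi (z0 + h) - phi z0) / h - psi z0) <= C.
Proof.
  intros Hh HD HB.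
  replace ((phi (z0 + h) - phi z0) / h - psi z0)
    with (((phi (z0 + h) - (z0 + h) * psi z0) - (phi z0 - z0 * psi z0)) / h) by (field; auto).
  unfold Rdiv. rewrite Rabs_mult, Rabs_inv.
  apply Rmult_le_reg_r with (Rabs h); [apply Rabs_pos_lt; auto|].
  rewrite Rmult_assoc, Rinv_l, Rmult_1_r by (apply Rabs_no_R0; auto).
  replace (Rabs h) with (Rabs (z0 + h - z0)) by (f_equal; ring).
  (* [z |-> phi z - z * psi z0] has derivative [psi z - psi z0], of size at most [C]. *)
  apply (lipschitz_of_derive (fun z => phi z - z * psi z0) (fun z => psi z - psi z0)
           (Rmin z0 (z0 + h)) (Rmax z0 (z0 + h))); auto;
    try (unfold Rmin, Rmax; destruct Rle_dec; lra).
  intros z Hz. apply (derivable_pt_lim_minus phi (fun z => z * psi z0)); auto.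
  apply is_derive_Reals. auto_derive; auto. ring.
Qed.

Lemma derivable_pt_lim_RInt_param (f g : R -> R -> R) z0 d C : 0 < d -> 0 <= C ->
  (forall z t, Rabs (z - z0) < d -> 0 <= t <= 1 -> derivable_pt_lim (fun z => f z t) z (g z t)) ->
  (forall z t, Rabs (z - z0) < d -> 0 <= t <= 1 -> Rabs (g z t - g z0 t) <= C * Rabs (z - z0)) ->
  (forall z, Rabs (z - z0) < d -> ex_RInt (f z) 0 1) -> ex_RInt (g z0) 0 1 ->
  derivable_pt_lim (fun z => RInt (f z) 0 1) z0 (RInt (g z0) 0 1).
Proof.
  intros Hd HC HD HL Hf Hg eps Heps.
  assert (Hdel : 0 < Rmin d (eps / (C + 1)))
    by (apply Rmin_glb_lt; [lra|apply Rdiv_lt_0_compat; lra]).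
  exists (mkposreal _ Hdel). intros h Hh0 Hh. simpl in Hh.
  assert (Hhd : Rabs h < d) by (eapply Rlt_le_trans; [apply Hh|apply Rmin_l]).
  assert (Hhe : Rabs h < eps / (C + 1)) by (eapply Rlt_le_trans; [apply Hh|apply Rmin_r]).
  assert (Hnear : forall z, Rmin z0 (z0 + h) <= z <= Rmax z0 (z0 + h) -> Rabs (z - z0) <= Rabs h)
    by (intros z Hz; unfold Rmin, Rmax in Hz; destruct Rle_dec; unfold Rabs;
        repeat destruct Rcase_abs; lra).
  set (q t := (f (z0 + h) t - f z0 t) / h).
  assert (Hq : is_RInt q 0 1 ((RInt (f (z0 + h)) 0 1 - RInt (f z0) 0 1) / h)).
  { apply is_RInt_div_diff; [lra|apply Hf..|reflexivity]; [replace (z0 + h - z0) with h by ring|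
      rewrite Rminus_diag, Rabs_R0]; lra. }
  rewrite <- (is_RInt_unique _ _ _ _ Hq), <- RInt_minus_R by (auto; eexists; exact Hq).
  apply Rle_lt_trans with ((1 - 0) * (C * Rabs h)).
  - apply abs_RInt_le_const; [lra|apply ex_RInt_minus_R; auto; eexists; exact Hq|].
    intros t Ht. apply (difference_quotient_le (fun z => f z t) (fun z => g z t)); auto.
    + intros z Hz. apply HD; auto. specialize (Hnear z Hz). lra.
    + intros z Hz. specialize (Hnear z Hz). eapply Rle_trans; [apply HL; auto; lra|].
      apply Rmult_le_compat_l; auto.
  - rewrite Rminus_0_r, Rmult_1_l. apply Rmult_lt_of_lt_div_succ; auto using Rabs_pos.
Qed.

(* [dinv_factor j z t] is the [j]-th derivative in [z] of [1 / factor t z]. *)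
Definition dinv_factor (j : nat) (z t : R) : R := (-t) ^ j * INR (fact j) / factor t z ^ S j.

Lemma dinv_factor_derivable j z t : factor t z <> 0 ->
  derivable_pt_lim (fun z => dinv_factor j z t) z (dinv_factor (S j) z t).
Proof.
  intros HP. apply is_derive_Reals. unfold dinv_factor, factor in *.
  assert ((1 + t * (z - 1)) ^ j <> 0) by (apply pow_nonzero; auto).
  auto_derive; replace (z + - (1)) with (z - 1) by ring;
    [apply Rmult_integral_contrapositive_currified; auto|].
  rewrite fact_simpl, mult_INR, S_INR. simpl pow.
  replace (match j with 0%nat => 1 | S _ => INR j + 1 end) with (INR j + 1)
    by (destruct j; simpl; ring).
  field. auto.
Qed.

Lemma dinv_factor_bound j z t lo : 0 <= t <= 1 -> 0 < lo <= z ->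
  Rabs (dinv_factor j z t) <= INR (fact j) / Rmin 1 lo ^ S j.
Proof.
  intros Ht Hz. pose proof (factor_lb t z lo Ht Hz). pose proof (Rmin_1_pos lo (proj1 Hz)).
  unfold dinv_factor, Rdiv.
  rewrite !Rabs_mult, Rabs_inv, <- !RPow_abs, Rabs_Ropp, (Rabs_pos_eq t), (Rabs_pos_eq (INR _)),
    (Rabs_pos_eq (factor t z)) by (apply pos_INR || lra).
  pose proof (pow_le_1 t j Ht). pose proof (pow_le t j (proj1 Ht)). pose proof (pos_INR (fact j)).
  assert (/ factor t z ^ S j <= / Rmin 1 lo ^ S j)
    by (apply Rinv_le_contravar; [apply pow_lt; lra|apply pow_incr; lra]).
  assert (0 <= / factor t z ^ S j) by (apply Rlt_le, Rinv_0_lt_compat, pow_lt; lra).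
  apply Rle_trans with (1 * INR (fact j) * / factor t z ^ S j).
  - apply Rmult_le_compat_r; auto. apply Rmult_le_compat_r; auto.
  - rewrite Rmult_1_l. apply Rmult_le_compat_l; auto.
Qed.

Lemma continuity_pt_dinv_factor j z t : 0 < z -> 0 <= t <= 1 -> continuity_pt (dinv_factor j z) t.
Proof.
  intros Hz Ht. apply continuity_pt_ex_derive. unfold dinv_factor.
  pose proof (factor_pos t z Ht Hz). unfold factor in *. auto_derive.
  apply (pow_nonzero _ (S j)). lra.
Qed.

Lemma derivable_pt_lim_RInt_dinv_factor (c : R -> R) j z0 : 0 < z0 ->
  (forall t, 0 <= t <= 1 -> continuity_pt c t) ->
  derivable_pt_lim (fun z => RInt (fun t => c t * dinv_factor j z t) 0 1) z0
    (RInt (fun t => c t * dinv_factor (S j) z0 t) 0 1).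
Proof.
  intros Hz Hc. destruct (continuity_bounded c 0 1) as [Cc [HCc Hcb]]; [lra|auto|].
  assert (Hnear : forall z, Rabs (z - z0) < z0 / 2 -> z0 / 2 <= z)
    by (intros z Hz'; unfold Rabs in Hz'; destruct Rcase_abs; lra).
  set (mn := Rmin 1 (z0 / 2)). assert (Hmn : 0 < mn) by (apply Rmin_1_pos; lra).
  apply (derivable_pt_lim_RInt_param (fun z t => c t * dinv_factor j z t)
    (fun z t => c t * dinv_factor (S j) z t) z0 (z0 / 2)
    (Cc * (INR (fact (S (S j))) / mn ^ S (S (S j))))); [lra| | | | |].
  - apply Rmult_le_pos; auto. apply Rdiv_le_0_compat; [apply pos_INR|apply pow_lt; auto].
  - intros z t Hz' Ht. apply derivable_pt_lim_scal, dinv_factor_derivable.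
    pose proof (factor_pos t z Ht ltac:(specialize (Hnear z Hz'); lra)). lra.
  - intros z t Hz' Ht. specialize (Hnear z Hz').
    rewrite <- Rmult_minus_distr_l, Rabs_mult, Rmult_assoc.
    apply Rmult_le_compat; try apply Rabs_pos; auto.
    apply (lipschitz_of_derive (fun z => dinv_factor (S j) z t) (fun z => dinv_factor (S (S j)) z t)
             (Rmin z z0) (Rmax z z0)); try (unfold Rmin, Rmax; destruct Rle_dec; lra).
    + intros c' Hc'. apply dinv_factor_derivable.
      assert (0 < c') by (unfold Rmin, Rmax in Hc'; destruct Rle_dec; lra).
      pose proof (factor_pos t c' Ht H). lra.
    + intros c' Hc'. apply dinv_factor_bound; auto.
      unfold Rmin, Rmax in Hc'; destruct Rle_dec; lra.
  - intros z Hz'. specialize (Hnear z Hz'). apply ex_RInt_continuity_pt; [lra|].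
    intros t Ht. apply continuity_pt_mult; auto. apply continuity_pt_dinv_factor; auto; lra.
  - apply ex_RInt_continuity_pt; [lra|]. intros t Ht.
    apply continuity_pt_mult; auto. apply continuity_pt_dinv_factor; auto.
Qed.

(* [L0_deriv j] is the [j]-th derivative of [L0], since [L0 z = int_0^1 dt / factor t z]. *)
Definition L0_deriv j z := RInt (dinv_factor j z) 0 1.

Lemma L0_deriv_derivable j z : 0 < z -> derivable_pt_lim (L0_deriv j) z (L0_deriv (S j) z).
Proof.
  intros Hz.
  assert (E : forall j z, L0_deriv j z = RInt (fun t => 1 * dinv_factor j z t) 0 1)
    by (intros; apply RInt_ext_R; intros; ring).
  rewrite E. apply (derivable_pt_lim_locally_ext
    (fun z => RInt (fun t => 1 * dinv_factor j z t) 0 1) _ z (z - 1) (z + 1));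
    [lra|intros; symmetry; apply E|].
  apply derivable_pt_lim_RInt_dinv_factor; auto.
  intros. apply continuity_pt_const. intros u v; auto.
Qed.

Lemma L0_deriv_bounded j lo hi : 0 < lo ->
  exists B, 0 <= B /\ forall z, lo <= z <= hi -> Rabs (L0_deriv j z) <= B.
Proof.
  intros Hlo. exists (INR (fact j) / Rmin 1 lo ^ S j).
  split; [apply Rdiv_le_0_compat; [apply pos_INR|apply pow_lt, Rmin_1_pos; lra]|].
  intros z Hz. unfold L0_deriv.
  replace (INR (fact j) / Rmin 1 lo ^ S j) with ((1 - 0) * (INR (fact j) / Rmin 1 lo ^ S j))
    by ring.
  apply abs_RInt_le_const; [lra| |intros; apply dinv_factor_bound; auto; lra].
  apply ex_RInt_continuity_pt; [lra|]. intros. apply continuity_pt_dinv_factor; auto; lra.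
Qed.

Lemma L0_eq_L0_deriv z : 0 < z -> L0 z = L0_deriv 0 z.
Proof.
  intros Hz. unfold L0_deriv, L0.
  assert (HP : forall t, 0 <= t <= 1 -> 0 < factor t z) by (intros; apply factor_pos; auto).
  rewrite (RInt_ext_R _ (fun t => / factor t z)).
  2: { intros t Ht. rewrite Rmin_left, Rmax_right in Ht by lra.
       unfold dinv_factor. simpl. specialize (HP t ltac:(lra)). field. lra. }
  destruct Req_EM_T as [->|Hz1].
  - rewrite (RInt_ext_R _ (fun _ => 1)) by (intros; rewrite factor_1; apply Rinv_1).
    rewrite RInt_const. unfold scal; simpl. unfold mult; simpl. ring.
  - set (G t := ln (factor t z) / (z - 1)).
    assert (HI : is_RInt (fun t => / factor t z) 0 1 (minus (G 1) (G 0))).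
    { apply (@is_RInt_derive R_CompleteNormedModule G).
      - intros t Ht. rewrite Rmin_left, Rmax_right in Ht by lra. specialize (HP t Ht).
        unfold G, factor in *. auto_derive; [lra|]. field. lra.
      - intros t Ht. rewrite Rmin_left, Rmax_right in Ht by lra. specialize (HP t Ht).
        apply continuity_pt_filterlim, continuity_pt_ex_derive. unfold factor in *. auto_derive. lra. }
    rewrite (is_RInt_unique _ _ _ _ HI). unfold G, factor, minus, plus, opp. simpl.
    replace (1 + 1 * (z - 1)) with z by ring. replace (1 + 0 * (z - 1)) with 1 by ring.
    rewrite ln_1. field. lra.
Qed.

Lemma Dn_L0 j z : 0 < z -> Dn j L0 z = L0_deriv j z.
Proof.
  intros Hz. apply (Dn_eq_on L0 L0_deriv 0 (z + 1)); try lra.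
  - intros x Hx. apply L0_eq_L0_deriv. lra.
  - intros j' x Hx. apply L0_deriv_derivable. lra.
Qed.

(** * Closed forms of the divided differences of [ln] and [L0] *)

Definition L0_num (n : nat) t := (-t) ^ (n - 1).

Definition ln_num (n : nat) t := (-1) ^ n * t ^ (n - 2).

(* Only the singleton case differs from [kern ln_num]; it is chosen so that
   [int_0^1 ln_kernel [y] = ln y] and the recursion holds down to two nodes. *)
Definition ln_kernel (L : list R) t :=
  match L with [y] => (y - 1) / factor t y | _ => kern ln_num L t end.

Lemma ln_kernel_long L t : (2 <= length L)%nat -> ln_kernel L t = kern ln_num L t.
Proof. intros. destruct L as [|a [|b L]]; simpl in *; try lia; reflexivity. Qed.

Lemma continuity_pt_L0_kernel lo hi L t : 0 < lo -> all_in lo hi L -> 0 <= t <= 1 ->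
  continuity_pt (kern L0_num L) t.
Proof.
  intros. apply (continuity_pt_kern _ L lo hi); auto.
  apply continuity_pt_ex_derive. unfold L0_num. auto_derive. auto.
Qed.

Lemma continuity_pt_ln_kernel lo hi L t : 0 < lo -> all_in lo hi L -> 0 <= t <= 1 ->
  continuity_pt (ln_kernel L) t.
Proof.
  intros Hlo HL Ht. destruct L as [|y [|y' L]].
  - apply continuity_pt_const. intros u v; reflexivity.
  - apply List.Forall_cons_iff in HL as [Hy _].
    pose proof (factor_pos t y Ht ltac:(lra)).
    apply continuity_pt_ex_derive. unfold ln_kernel, factor in *. auto_derive. lra.
  - apply (continuity_pt_kern _ _ lo hi); auto.
    apply continuity_pt_ex_derive. unfold ln_num. auto_derive. auto.
Qed.

Lemma ln_kernel_rec lo hi y0 ys yk t : 0 < lo -> all_in lo hi (y0 :: ys ++ [yk]) -> y0 <> yk ->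
  0 <= t <= 1 ->
  ln_kernel (y0 :: ys ++ [yk]) t = (ln_kernel (yk :: ys) t - ln_kernel (y0 :: ys) t) / (yk - y0).
Proof.
  intros Hlo Hin Hne Ht. destruct (all_in_snoc_inv _ _ _ _ _ Hin) as [_ [Hin0 [Hyk Hy0]]].
  pose proof (factor_pos t y0 Ht ltac:(lra)). pose proof (factor_pos t yk Ht ltac:(lra)).
  destruct ys as [|y ys].
  - simpl. unfold kern, ln_num. simpl. unfold factor in *. field.
    repeat split; lra.
  - rewrite !ln_kernel_long by (simpl; rewrite ?length_app; simpl; lia).
    apply kern_rec; try lra.
    + unfold ln_num. simpl length. replace (S (S (S (length ys))) - 2)%nat with (S (length ys)) by lia.
      replace (S (S (length ys)) - 2)%nat with (length ys) by lia. simpl. ring.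
    + apply List.Forall_cons_iff in Hin0 as [_ Hys].
      pose proof (prod_factor_pos t (y :: ys) lo hi Ht Hlo Hys). lra.
Qed.

Lemma L0_kernel_rec lo hi y0 ys yk t : 0 < lo -> all_in lo hi (y0 :: ys ++ [yk]) -> y0 <> yk ->
  0 <= t <= 1 -> kern L0_num (y0 :: ys ++ [yk]) t =
  (kern L0_num (yk :: ys) t - kern L0_num (y0 :: ys) t) / (yk - y0).
Proof.
  intros Hlo Hin Hne Ht. destruct (all_in_snoc_inv _ _ _ _ _ Hin) as [_ [Hin0 [Hyk Hy0]]].
  apply List.Forall_cons_iff in Hin0 as [_ Hys].
  pose proof (factor_pos t y0 Ht ltac:(lra)). pose proof (factor_pos t yk Ht ltac:(lra)).
  pose proof (prod_factor_pos t ys lo hi Ht Hlo Hys).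
  apply kern_rec; try lra. unfold L0_num. simpl. rewrite Nat.sub_0_r. ring.
Qed.

Lemma RInt_ln_kernel_single y : 0 < y -> RInt (ln_kernel [y]) 0 1 = ln y.
Proof.
  intros Hy. assert (HP : forall t, 0 <= t <= 1 -> 0 < factor t y) by (intros; apply factor_pos; auto).
  set (G t := ln (factor t y)).
  assert (HI : is_RInt (ln_kernel [y]) 0 1 (minus (G 1) (G 0))).
  { apply (@is_RInt_derive R_CompleteNormedModule G).
    - intros t Ht. rewrite Rmin_left, Rmax_right in Ht by lra. specialize (HP t Ht).
      unfold G, ln_kernel, factor in *. auto_derive; [lra|]. field. lra.
    - intros t Ht. rewrite Rmin_left, Rmax_right in Ht by lra.
      apply continuity_pt_filterlim, (continuity_pt_ln_kernel y y); [lra| |lra].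
      constructor; [lra|constructor]. }
  rewrite (is_RInt_unique _ _ _ _ HI). unfold G, factor, minus, plus, opp. simpl.
  replace (1 + 1 * (y - 1)) with y by ring. replace (1 + 0 * (y - 1)) with 1 by ring.
  rewrite ln_1. ring.
Qed.

Lemma RInt_L0_kernel_single y : 0 < y -> RInt (kern L0_num [y]) 0 1 = L0_deriv 0 y.
Proof.
  intros Hy. apply RInt_ext_R. intros t Ht. rewrite Rmin_left, Rmax_right in Ht by lra.
  pose proof (factor_pos t y ltac:(lra) Hy).
  unfold kern, L0_num, dinv_factor. simpl. field. lra.
Qed.

Lemma dd_ln lo hi L : 0 < lo < hi -> all_in lo hi L -> L <> [] ->
  dd L ln = RInt (ln_kernel L) 0 1.
Proof.
  intros Hlh Hin HL. destruct L as [|y0 ys]; [congruence|]. unfold dd.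
  rewrite (sint_ext _ (ln_deriv (length ys)) lo hi) by
    ((intros; apply Dn_ln; lra) || (apply simplex_in_01; auto)).
  assert (Hex : forall L, all_in lo hi L -> ex_RInt (ln_kernel L) 0 1).
  { intros L HL'. apply ex_RInt_continuity_pt; [lra|].
    intros. apply (continuity_pt_ln_kernel lo hi); auto; lra. }
  apply (sint_eq_of_rec ln_deriv lo hi (fun L => RInt (ln_kernel L) 0 1)); auto; try lra.
  - intros j z Hz. apply ln_deriv_derivable. lra.
  - intros j. apply ln_deriv_bounded. lra.
  - intros y Hy. apply RInt_ln_kernel_single. lra.
  - intros y0' ys' yk Hin' Hne. destruct (all_in_snoc_inv _ _ _ _ _ Hin') as [Hk [H0 _]].
    apply is_RInt_unique, is_RInt_div_diff; auto; [lra|].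
    intros t Ht. apply (ln_kernel_rec lo hi); auto; lra.
  - intros y0' ys' yk Hin'.
    replace (fun y => RInt (ln_kernel (y0' :: ys' ++ [y])) 0 1)
      with (fun y => RInt (kern ln_num (y0' :: ys' ++ [y])) 0 1) by (destruct ys'; reflexivity).
    apply RInt_kern_continue_in; auto; [lra|]. intros t.
    apply continuity_pt_ex_derive. unfold ln_num. auto_derive. auto.
Qed.

Lemma dd_L0 lo hi L : 0 < lo < hi -> all_in lo hi L -> L <> [] ->
  dd L L0 = RInt (kern L0_num L) 0 1.
Proof.
  intros Hlh Hin HL. destruct L as [|y0 ys]; [congruence|]. unfold dd.
  rewrite (sint_ext _ (L0_deriv (length ys)) lo hi) by
    ((intros; apply Dn_L0; lra) || (apply simplex_in_01; auto)).
  assert (Hex : forall L, all_in lo hi L -> ex_RInt (kern L0_num L) 0 1).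
  { intros L HL'. apply ex_RInt_continuity_pt; [lra|].
    intros. apply (continuity_pt_L0_kernel lo hi); auto; lra. }
  apply (sint_eq_of_rec L0_deriv lo hi (fun L => RInt (kern L0_num L) 0 1)); auto; try lra.
  - intros j z Hz. apply L0_deriv_derivable. lra.
  - intros j. apply L0_deriv_bounded. lra.
  - intros y Hy. apply RInt_L0_kernel_single. lra.
  - intros y0' ys' yk Hin' Hne. destruct (all_in_snoc_inv _ _ _ _ _ Hin') as [Hk [H0 _]].
    apply is_RInt_unique, is_RInt_div_diff; auto; [lra|].
    intros t Ht. apply (L0_kernel_rec lo hi); auto; lra.
  - intros y0' ys' yk Hin'. apply RInt_kern_continue_in; auto; [lra|]. intros t.
    apply continuity_pt_ex_derive. unfold L0_num. auto_derive. auto.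
Qed.

Lemma dd_ln_cons_1 lo hi L : 0 < lo < hi -> lo <= 1 <= hi -> all_in lo hi L -> L <> [] ->
  dd (1 :: L) ln = dd L L0.
Proof.
  intros Hlh H1 Hin HL.
  rewrite (dd_ln lo hi), (dd_L0 lo hi); auto; [|constructor; auto|discriminate].
  apply RInt_ext_R. intros t _. destruct L as [|y L]; [congruence|].
  unfold ln_kernel, kern, ln_num, L0_num. simpl prod_factor. simpl length.
  rewrite factor_1, Rmult_1_l.
  replace (S (S (length L)) - 2)%nat with (length L) by lia.
  replace (S (length L) - 1)%nat with (length L) by lia.
  replace (-t) with (-1 * t) by ring. rewrite Rpow_mult_distr. simpl. unfold Rdiv. ring.
Qed.

Lemma neg1_pow_mul_self n : (-1) ^ n * (-1) ^ n = 1.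
Proof. rewrite <- Rpow_mult_distr. replace (-1 * -1) with 1 by ring. apply pow1. Qed.

Lemma neg1_pow_odd n : (-1) ^ (n + n + 1) = -1.
Proof. rewrite !pow_add, neg1_pow_mul_self. ring. Qed.

Definition nodes_lo a b := Rmin 1 (Rmin a b) / 2.
Definition nodes_hi a b := Rmax 1 (Rmax a b) + 1.

Lemma nodes_bounds a b : 0 < a -> 0 < b ->
  0 < nodes_lo a b < nodes_hi a b /\ (forall y, y = 1 \/ y = a \/ y = b ->
  nodes_lo a b <= y <= nodes_hi a b).
Proof.
  intros. unfold nodes_lo, nodes_hi, Rmin, Rmax.
  split; [|intros y Hy]; repeat destruct Rle_dec; lra.
Qed.

Lemma all_in_repeat lo hi y k : lo <= y <= hi -> all_in lo hi (repeat y k).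
Proof. intros Hy. induction k; constructor; auto. Qed.

Lemma all_in_pts a b k l q : 0 < a -> 0 < b -> all_in (nodes_lo a b) (nodes_hi a b) (pts k a l b q).
Proof.
  intros Ha Hb. destruct (nodes_bounds a b Ha Hb) as [_ Hy].
  unfold all_in, pts. repeat (apply List.Forall_app; split); apply all_in_repeat, Hy; auto.
Qed.

(* The integrand of [H_alpha] after the substitution [x = t / (1 - t)]. *)
Definition Kint (a0 a1 a2 : nat) a b t :=
  t ^ (a0 + a1 + a2 + 1) / (factor t a ^ S a1 * factor t b ^ S a2).

Lemma dd_L0_pts a0 a1 a2 a b : 0 < a -> 0 < b ->
  (-1) ^ (a0 + a1 + a2 + 1) * dd (pts a0 a (S a1) b (S a2)) L0 = RInt (Kint a0 a1 a2 a b) 0 1.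
Proof.
  intros Ha Hb. destruct (nodes_bounds a b Ha Hb) as [Hlh _].
  rewrite (dd_L0 (nodes_lo a b) (nodes_hi a b)); auto;
    [|apply all_in_pts; auto|unfold pts; destruct a0; discriminate].
  rewrite <- RInt_scal_R.
  2: { apply ex_RInt_continuity_pt; [lra|]. intros.
       apply (continuity_pt_L0_kernel (nodes_lo a b) (nodes_hi a b)); try apply all_in_pts; auto; lra. }
  apply RInt_ext_R. intros t _. unfold kern, L0_num, Kint, pts.
  rewrite !length_app, !repeat_length, !prod_factor_app, !prod_factor_repeat, factor_1, pow1.
  replace (a0 + (S a1 + S a2) - 1)%nat with (a0 + a1 + a2 + 1)%nat by lia.
  rewrite Rmult_1_l.
  replace (-t) with (-1 * t) by ring. rewrite Rpow_mult_distr.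
  pose proof (neg1_pow_mul_self (a0 + a1 + a2 + 1)). unfold Rdiv.
  transitivity ((-1) ^ (a0 + a1 + a2 + 1) * (-1) ^ (a0 + a1 + a2 + 1) *
    (t ^ (a0 + a1 + a2 + 1) * / (factor t a ^ S a1 * factor t b ^ S a2))); [ring|].
  rewrite H. ring.
Qed.

Lemma dd_ln_pts a0 a1 a2 a b : 0 < a -> 0 < b ->
  (-1) ^ (a0 + a1 + a2 + 1) * dd (pts (S a0) a (S a1) b (S a2)) ln = RInt (Kint a0 a1 a2 a b) 0 1.
Proof.
  intros Ha Hb. destruct (nodes_bounds a b Ha Hb) as [Hlh H1].
  change (pts (S a0) a (S a1) b (S a2)) with (1 :: pts a0 a (S a1) b (S a2)).
  rewrite (dd_ln_cons_1 (nodes_lo a b) (nodes_hi a b)); auto;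
    [apply dd_L0_pts; auto|apply all_in_pts; auto|unfold pts; destruct a0; discriminate].
Qed.

Lemma Lmod_RInt r s : 0 < s -> Lmod r s = RInt (fun t => t ^ r / factor t s) 0 1.
Proof.
  intros Hs. destruct (nodes_bounds s s Hs Hs) as [Hlh H1].
  assert (Hin : all_in (nodes_lo s s) (nodes_hi s s) (repeat 1 r ++ [s])).
  { apply List.Forall_app. split; [apply all_in_repeat, H1; auto|constructor; auto]. }
  unfold Lmod. change (repeat 1 (S r) ++ [s]) with (1 :: repeat 1 r ++ [s]).
  rewrite (dd_ln_cons_1 (nodes_lo s s) (nodes_hi s s)), (dd_L0 (nodes_lo s s) (nodes_hi s s));
    auto; [|destruct r; discriminate..].
  rewrite <- RInt_scal_R.
  2: { apply ex_RInt_continuity_pt; [lra|]. intros.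
       apply (continuity_pt_L0_kernel (nodes_lo s s) (nodes_hi s s)); auto; lra. }
  apply RInt_ext_R. intros t _. unfold kern, L0_num.
  rewrite length_app, repeat_length, prod_factor_app, prod_factor_repeat, factor_1, pow1.
  simpl. replace (r + 1 - 1)%nat with r by lia.
  replace (-t) with (-1 * t) by ring. rewrite Rpow_mult_distr.
  rewrite Rmult_1_l, Rmult_1_r. pose proof (neg1_pow_mul_self r). unfold Rdiv.
  transitivity ((-1) ^ r * (-1) ^ r * (t ^ r * / factor t s)); [ring|]. rewrite H. ring.
Qed.

Lemma continuity_pt_Kint a0 a1 a2 a b t : 0 < a -> 0 < b -> 0 <= t <= 1 ->
  continuity_pt (Kint a0 a1 a2 a b) t.
Proof.
  intros Ha Hb Ht. pose proof (factor_pos t a Ht Ha). pose proof (factor_pos t b Ht Hb).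
  apply continuity_pt_ex_derive. unfold Kint, factor in *. auto_derive.
  apply Rmult_integral_contrapositive_currified; apply (pow_nonzero _ (S _)); lra.
Qed.

Lemma Kint_bound a0 a1 a2 a b t : 0 < a -> 0 < b -> 0 <= t <= 1 ->
  Rabs (Kint a0 a1 a2 a b t) <= / (Rmin 1 a ^ S a1 * Rmin 1 b ^ S a2).
Proof.
  intros Ha Hb Ht. unfold Kint.
  pose proof (factor_lb t a a Ht ltac:(lra)). pose proof (factor_lb t b b Ht ltac:(lra)).
  pose proof (Rmin_1_pos a Ha). pose proof (Rmin_1_pos b Hb).
  assert (Rmin 1 a ^ S a1 <= factor t a ^ S a1) by (apply pow_incr; lra).
  assert (Rmin 1 b ^ S a2 <= factor t b ^ S a2) by (apply pow_incr; lra).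
  assert (0 < Rmin 1 a ^ S a1) by (apply pow_lt; lra).
  assert (0 < Rmin 1 b ^ S a2) by (apply pow_lt; lra).
  unfold Rdiv. rewrite Rabs_mult, Rabs_inv, (Rabs_pos_eq (t ^ _)) by (apply pow_le; lra).
  rewrite Rabs_pos_eq by nra.
  assert (/ (factor t a ^ S a1 * factor t b ^ S a2) <= / (Rmin 1 a ^ S a1 * Rmin 1 b ^ S a2))
    by (apply Rinv_le_contravar; [nra|apply Rmult_le_compat; lra]).
  pose proof (pow_le_1 t (a0 + a1 + a2 + 1) Ht). pose proof (pow_le t (a0 + a1 + a2 + 1) (proj1 Ht)).
  assert (0 <= / (factor t a ^ S a1 * factor t b ^ S a2)) by (apply Rlt_le, Rinv_0_lt_compat; nra).
  nra.
Qed.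

(** * The improper integral *)

Lemma continuity_pt_Hint a0 a1 a2 a b x : 0 < a -> 0 < b -> 0 <= x ->
  continuity_pt (Hint a0 a1 a2 a b) x.
Proof.
  intros Ha Hb Hx. apply continuity_pt_ex_derive. unfold Hint. auto_derive.
  repeat apply Rmult_integral_contrapositive_currified; apply pow_nonzero; nra.
Qed.

Lemma Hint_subst a0 a1 a2 a b y : 0 < a -> 0 < b -> 0 <= y < 1 ->
  / (1 - y) ^ 2 * Hint a0 a1 a2 a b (y / (1 - y)) = Kint a0 a1 a2 a b y.
Proof.
  intros Ha Hb Hy. unfold Hint, Kint.
  pose proof (factor_pos y a ltac:(lra) Ha). pose proof (factor_pos y b ltac:(lra) Hb).
  replace (1 + y / (1 - y)) with (/ (1 - y)) by (field; lra).
  replace (1 + a * (y / (1 - y))) with (factor y a * / (1 - y)) by (unfold factor; field; lra).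
  replace (1 + b * (y / (1 - y))) with (factor y b * / (1 - y)) by (unfold factor; field; lra).
  unfold Rdiv. rewrite !Rpow_mult_distr, !pow_inv.
  set (w := 1 - y). assert (Hw : 0 < w) by (unfold w; lra). clearbody w.
  set (N := (a0 + a1 + a2 + 1)%nat).
  assert (Ew : w ^ (a0 + 1) * w ^ (a1 + 1) * w ^ (a2 + 1) = w ^ N * w ^ 2)
    by (rewrite <- !pow_add; f_equal; unfold N; lia).
  replace (S a1) with (a1 + 1)%nat by lia. replace (S a2) with (a2 + 1)%nat by lia.
  assert (w ^ N <> 0) by (apply pow_nonzero; lra).
  assert (w ^ 2 <> 0) by (apply pow_nonzero; lra).
  assert (factor y a ^ (a1 + 1) <> 0) by (apply pow_nonzero; lra).
  assert (factor y b ^ (a2 + 1) <> 0) by (apply pow_nonzero; lra).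
  transitivity (y ^ N * (w ^ (a0 + 1) * w ^ (a1 + 1) * w ^ (a2 + 1)) /
    (w ^ 2 * w ^ N * (factor y a ^ (a1 + 1) * factor y b ^ (a2 + 1)))).
  { field. repeat split; try apply pow_nonzero; lra. }
  rewrite Ew. field. repeat split; auto; lra.
Qed.

Lemma RInt_Hint a0 a1 a2 a b T : 0 < a -> 0 < b -> 0 <= T ->
  RInt (Hint a0 a1 a2 a b) 0 T = RInt (Kint a0 a1 a2 a b) 0 (T / (1 + T)).
Proof.
  intros Ha Hb HT. set (s := T / (1 + T)).
  assert (Hs : 0 <= s < 1).
  { unfold s. split; [apply Rdiv_le_0_compat; lra|].
    apply Rmult_lt_reg_r with (1 + T); [lra|]. unfold Rdiv. rewrite Rmult_assoc, Rinv_l; lra. }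
  assert (Hcomp := RInt_comp (Hint a0 a1 a2 a b) (fun y => y / (1 - y)) (fun y => / (1 - y) ^ 2) 0 s).
  cbv beta in Hcomp. replace (0 / (1 - 0)) with 0 in Hcomp by field.
  replace (s / (1 - s)) with T in Hcomp by (unfold s; field; lra).
  rewrite <- Hcomp.
  - apply RInt_ext_R. intros y Hy. rewrite Rmin_left, Rmax_right in Hy by lra.
    apply Hint_subst; auto; lra.
  - intros x Hx. rewrite Rmin_left, Rmax_right in Hx by lra.
    apply continuity_pt_filterlim, continuity_pt_Hint; auto. apply Rdiv_le_0_compat; lra.
  - intros x Hx. rewrite Rmin_left, Rmax_right in Hx by lra. split.
    + auto_derive; [lra|]. field. lra.
    + apply continuity_pt_filterlim, continuity_pt_ex_derive. auto_derive. nra.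
Qed.

Lemma improper_int0_Hint a0 a1 a2 a b : 0 < a -> 0 < b ->
  improper_int0 (Hint a0 a1 a2 a b) (RInt (Kint a0 a1 a2 a b) 0 1).
Proof.
  intros Ha Hb. split.
  { intros T HT. constructor. apply continuity_implies_RiemannInt; auto.
    intros x Hx. apply continuity_pt_Hint; auto; lra. }
  intros eps Heps. set (C := / (Rmin 1 a ^ S a1 * Rmin 1 b ^ S a2)).
  assert (HC : 0 < C)
    by (apply Rinv_0_lt_compat, Rmult_lt_0_compat; apply pow_lt, Rmin_1_pos; auto).
  exists (C / eps). intros T HT. assert (HT0 : 0 < T) by (pose proof (Rdiv_lt_0_compat C eps); lra).
  set (s := T / (1 + T)). assert (Hs : 0 <= s <= 1).
  { unfold s. split; [apply Rdiv_le_0_compat; lra|].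
    apply Rmult_le_reg_r with (1 + T); [lra|]. unfold Rdiv. rewrite Rmult_assoc, Rinv_l; lra. }
  assert (Hex : ex_RInt (Kint a0 a1 a2 a b) 0 1)
    by (apply ex_RInt_continuity_pt; [lra|]; intros; apply continuity_pt_Kint; auto).
  rewrite Rint_RInt by (apply ex_RInt_continuity_pt; [lra|intros; apply continuity_pt_Hint; auto; lra]).
  rewrite RInt_Hint by (auto; lra). fold s.
  rewrite <- (RInt_Chasles (Kint a0 a1 a2 a b) 0 s 1)
    by (apply (ex_RInt_Chasles_1 (Kint a0 a1 a2 a b) 0 s 1)
        || apply (ex_RInt_Chasles_2 (Kint a0 a1 a2 a b) 0 s 1); auto).
  change plus with Rplus.
  replace (RInt (Kint a0 a1 a2 a b) 0 s - (RInt (Kint a0 a1 a2 a b) 0 s + RInt (Kint a0 a1 a2 a b) s 1))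
    with (- RInt (Kint a0 a1 a2 a b) s 1) by ring.
  rewrite Rabs_Ropp. apply Rle_lt_trans with ((1 - s) * C).
  - apply abs_RInt_le_const; [lra|apply (ex_RInt_Chasles_2 (Kint a0 a1 a2 a b) 0 s 1); auto|].
    intros t Ht. apply Kint_bound; auto. lra.
  - replace (1 - s) with (/ (1 + T)) by (unfold s; field; lra).
    apply Rmult_lt_reg_l with (1 + T); [lra|].
    rewrite <- Rmult_assoc, Rinv_r, Rmult_1_l by lra.
    apply Rge_le, (Rmult_le_compat_r eps) in HT; [|lra].
    unfold Rdiv in HT. rewrite Rmult_assoc, Rinv_l, Rmult_1_r in HT by lra. lra.
Qed.

(** * Derivatives of the difference quotient of [Lmod] *)

Definition Lmod_slope_deriv r i j a b :=
  RInt (fun t => - t ^ (r + 1) * dinv_factor i a t * dinv_factor j b t) 0 1.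

Lemma Lmod_slope r a b : 0 < a -> 0 < b -> a <> b ->
  (Lmod r b - Lmod r a) / (b - a) = Lmod_slope_deriv r 0 0 a b.
Proof.
  intros Ha Hb Hne. rewrite !Lmod_RInt by auto. symmetry.
  apply is_RInt_unique, is_RInt_div_diff; [lra|..];
    try (apply ex_RInt_continuity_pt; [lra|]; intros t Ht;
         pose proof (factor_pos t _ Ht Hb); pose proof (factor_pos t _ Ht Ha);
         apply continuity_pt_ex_derive; unfold factor in *; auto_derive; lra).
  intros t Ht. pose proof (factor_pos t a Ht Ha). pose proof (factor_pos t b Ht Hb).
  unfold dinv_factor. rewrite pow_add. simpl. unfold factor in *. field.
  repeat split; lra.
Qed.

Lemma Lmod_slope_deriv_derivable_b r i j a b : 0 < a -> 0 < b ->
  derivable_pt_lim (Lmod_slope_deriv r i j a) b (Lmod_slope_deriv r i (S j) a b).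
Proof.
  intros Ha Hb. apply (derivable_pt_lim_RInt_dinv_factor (fun t => - t ^ (r + 1) * dinv_factor i a t));
    auto.
  intros t Ht. apply continuity_pt_mult; [|apply continuity_pt_dinv_factor; auto].
  apply continuity_pt_ex_derive. auto_derive. auto.
Qed.

Lemma Lmod_slope_deriv_derivable_a r i j a b : 0 < a -> 0 < b ->
  derivable_pt_lim (fun a => Lmod_slope_deriv r i j a b) a (Lmod_slope_deriv r (S i) j a b).
Proof.
  intros Ha Hb.
  assert (E : forall i a, Lmod_slope_deriv r i j a b =
    RInt (fun t => (- t ^ (r + 1) * dinv_factor j b t) * dinv_factor i a t) 0 1)
    by (intros; apply RInt_ext_R; intros; ring).
  rewrite E. apply (derivable_pt_lim_locally_ext
    (fun a => RInt (fun t => (- t ^ (r + 1) * dinv_factor j b t) * dinv_factor i a t) 0 1)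
    _ a (a - 1) (a + 1)); [lra|intros; symmetry; apply E|].
  apply derivable_pt_lim_RInt_dinv_factor; auto.
  intros t Ht. apply continuity_pt_mult; [|apply continuity_pt_dinv_factor; auto].
  apply continuity_pt_ex_derive. auto_derive. auto.
Qed.

Lemma Dn_Lmod_slope r a b j : 0 < a -> 0 < b -> a <> b ->
  Dn j (fun b' => (Lmod r b' - Lmod r a) / (b' - a)) b = Lmod_slope_deriv r 0 j a b.
Proof.
  intros Ha Hb Hne.
  destruct (Rlt_or_le a b) as [Hlt|Hle];
    [apply (Dn_eq_on _ (fun j b' => Lmod_slope_deriv r 0 j a b') a (b + 1))
    |apply (Dn_eq_on _ (fun j b' => Lmod_slope_deriv r 0 j a b') 0 a)]; try lra;
    intros; [apply Lmod_slope|apply Lmod_slope_deriv_derivable_b|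
             apply Lmod_slope|apply Lmod_slope_deriv_derivable_b]; lra.
Qed.

Lemma Dn_Dn_Lmod_slope r a b i j : 0 < a -> 0 < b -> a <> b ->
  Dn i (fun a' => Dn j (fun b' => (Lmod r b' - Lmod r a') / (b' - a')) b) a =
  Lmod_slope_deriv r i j a b.
Proof.
  intros Ha Hb Hne.
  destruct (Rlt_or_le a b) as [Hlt|Hle];
    [apply (Dn_eq_on _ (fun i a' => Lmod_slope_deriv r i j a' b) 0 b)
    |apply (Dn_eq_on _ (fun i a' => Lmod_slope_deriv r i j a' b) b (a + 1))]; try lra;
    intros; [apply Dn_Lmod_slope|apply Lmod_slope_deriv_derivable_a|
             apply Dn_Lmod_slope|apply Lmod_slope_deriv_derivable_a]; lra.
Qed.

Lemma Lmod_slope_deriv_Kint a0 a1 a2 a b : 0 < a -> 0 < b ->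
  (-1) ^ (a0 + a1 + a2 + a0 + 1) / (INR (fact a1) * INR (fact a2)) * Lmod_slope_deriv a0 a1 a2 a b
  = RInt (Kint a0 a1 a2 a b) 0 1.
Proof.
  intros Ha Hb. unfold Lmod_slope_deriv. rewrite <- RInt_scal_R.
  2: { apply ex_RInt_continuity_pt; [lra|]. intros t Ht.
       apply continuity_pt_mult; [apply continuity_pt_mult|]; try apply continuity_pt_dinv_factor; auto.
       apply continuity_pt_ex_derive. auto_derive. auto. }
  apply RInt_ext_R. intros t Ht. rewrite Rmin_left, Rmax_right in Ht by lra.
  pose proof (factor_pos t a ltac:(lra) Ha). pose proof (factor_pos t b ltac:(lra) Hb).
  pose proof (INR_fact_neq_0 a1). pose proof (INR_fact_neq_0 a2).
  unfold dinv_factor, Kint. replace (-t) with (-1 * t) by ring. rewrite !Rpow_mult_distr.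
  assert (Esign : (-1) ^ (a0 + a1 + a2 + a0 + 1) * (-1) ^ a1 * (-1) ^ a2 = -1).
  { rewrite <- !pow_add.
    replace (a0 + a1 + a2 + a0 + 1 + a1 + a2)%nat with ((a0 + a1 + a2) + (a0 + a1 + a2) + 1)%nat by lia.
    apply neg1_pow_odd. }
  assert (Et : t ^ (a0 + 1) * t ^ a1 * t ^ a2 = t ^ (a0 + a1 + a2 + 1))
    by (rewrite <- !pow_add; f_equal; lia).
  rewrite <- Et. set (s := (-1) ^ (a0 + a1 + a2 + a0 + 1)) in *.
  transitivity (- (s * (-1) ^ a1 * (-1) ^ a2) * (t ^ (a0 + 1) * t ^ a1 * t ^ a2) /
    (factor t a ^ S a1 * factor t b ^ S a2)).
  { field. repeat split; auto; apply pow_nonzero; lra. }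
  rewrite Esign. field. split; apply pow_nonzero; lra.
Qed.

Theorem mainTheorem16 :
  forall (a0 a1 a2 : nat) (a b : R), 0 < a -> 0 < b -> a <> b ->
  let V := (-1) ^ (a0 + a1 + a2 + 1) * dd (pts (S a0) a (S a1) b (S a2)) ln in
  improper_int0 (Hint a0 a1 a2 a b) V /\
  V = (-1) ^ (a0 + a1 + a2 + 1) * dd (pts a0 a (S a1) b (S a2)) L0 /\
  V = (-1) ^ (a0 + a1 + a2 + a0 + 1) / (INR (fact a1) * INR (fact a2)) *
      Dn a1 (fun a' => Dn a2 (fun b' => (Lmod a0 b' - Lmod a0 a') / (b' - a')) b) a /\
  improper_int0 (Hint a0 0 0 a b) (- ((Lmod a0 b - Lmod a0 a) / (b - a))).
Proof.
  intros a0 a1 a2 a b Ha Hb Hab V.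
  assert (HV : V = RInt (Kint a0 a1 a2 a b) 0 1) by (apply dd_ln_pts; auto).
  split; [|split; [|split]].
  - rewrite HV. apply improper_int0_Hint; auto.
  - rewrite HV, dd_L0_pts; auto.
  - rewrite HV, Dn_Dn_Lmod_slope, Lmod_slope_deriv_Kint; auto.
  - replace (- ((Lmod a0 b - Lmod a0 a) / (b - a))) with (RInt (Kint a0 0 0 a b) 0 1);
      [apply improper_int0_Hint; auto|].
    rewrite <- Lmod_slope_deriv_Kint, <- Lmod_slope by auto.
    replace (a0 + 0 + 0 + a0 + 1)%nat with (a0 + a0 + 1)%nat by lia.
    rewrite neg1_pow_odd. simpl. field. lra.
Qed.
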